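(* Let $\Lambda\in\mathbb{N}$ and let $\bm{\omega}=\sum_{l=0}^{\Lambda}\sum_{h=-l}^{l}\omega_l^h\bm{\psi}_l^h\in\mathcal{H}_\Lambda$ satisfy $$\sum_{h=-l}^{l}|\omega_l^h|^2=\frac{2l+1}{(\Lambda+1)^2},\qquad l=0,1,\dots,\Lambda.$$ Then on $\mathcal{H}_\Lambda$ the resolution of the identity $$I=\frac{(\Lambda+1)^2}{8\pi^2}\int_{SO(3)}d\mu(g)\,P_g,\qquad P_g:=\bm{\omega}_g\langle\bm{\omega}_g,\cdot\rangle,\qquad \bm{\omega}_g:=\pi_\Lambda(g)\bm{\omega}$$ holds. Moreover, if $\omega_l^h=\omega_l^{-h}$ for all $l,h$, the set $\{\bm{\omega}_g\}_{g\in SO(3)}$ is mapped into itself by the unitary operator $U$ defined by $U\bm{\psi}_l^h=\bm{\psi}_l^{-h}$.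
   Context: $\mathcal{H}_\Lambda$ is a Hilbert space with orthonormal basis $\{\bm{\psi}_l^m\}_{l=0,\dots,\Lambda;\ m=-l,\dots,l}$. Operators: $L_3\bm{\psi}_l^m=m\bm{\psi}_l^m$, $L_\pm\bm{\psi}_l^m=\sqrt{(l\mp m)(l\pm m+1)}\,\bm{\psi}_l^{m\pm1}$, $L_1=(L_++L_-)/2$, $L_2=(L_+-L_-)/(2i)$. $\pi_\Lambda$ is the unitary representation of $SO(3)$ on $\mathcal{H}_\Lambda$ generated by the $L_i$: with Euler angles $(\varphi,\theta,\psi)\in[0,2\pi)\times[0,\pi]\times[0,2\pi)$, $\pi_\Lambda(g)=e^{i\varphi L_3}e^{i\theta L_2}e^{i\psi L_3}$ and $\int_{SO(3)}d\mu(g)=\int_0^{2\pi}d\varphi\int_0^\pi d\theta\sin\theta\int_0^{2\pi}d\psi$. The inner product is antilinear in the first argument. *)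

From Stdlib Require Export Reals List ZArith Bool.
From Coquelicot Require Export Coquelicot.

Open Scope R_scope.
Open Scope bool_scope.
Open Scope R_scope.

(* Basis index (l, m) of psi_l^m, 0 <= l <= Lambda, -l <= m <= l. *)
Definition ix : Type := (nat * Z)%type.

Definition valid (Lam : nat) (a : ix) : Prop :=
  (fst a <= Lam)%nat /\ (- Z.of_nat (fst a) <= snd a <= Z.of_nat (fst a))%Z.

Definition mrange (l : nat) : list Z :=
  map (fun k => (Z.of_nat k - Z.of_nat l)%Z) (seq 0 (2 * l + 1)).

Definition idx (Lam : nat) : list ix :=
  flat_map (fun l => map (fun m => (l, m)) (mrange l)) (seq 0 (S Lam)).

(* vectors of H_Lambda = coordinate functions on the basis (only indices of idx
   Lam are ever used); operators = their matrices A a b = <psi_a, A psi_b>. *)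
Definition vec : Type := ix -> C.
Definition mat : Type := ix -> ix -> C.

Fixpoint sumC {T : Type} (s : list T) (f : T -> C) : C :=
  match s with nil => 0%C | x :: s' => (f x + sumC s' f)%C end.

Fixpoint sumR {T : Type} (s : list T) (f : T -> R) : R :=
  match s with nil => 0 | x :: s' => f x + sumR s' f end.

Definition ix_eqb (a b : ix) : bool := Nat.eqb (fst a) (fst b) && Z.eqb (snd a) (snd b).

Definition idm : mat := fun a b => if ix_eqb a b then 1%C else 0%C.
Definition madd (A B : mat) : mat := fun a b => (A a b + B a b)%C.
Definition mscale (c : C) (A : mat) : mat := fun a b => (c * A a b)%C.
Definition mmul (Lam : nat) (A B : mat) : mat :=
  fun a b => sumC (idx Lam) (fun c => (A a c * B c b)%C).
Definition mvec (Lam : nat) (A : mat) (v : vec) : vec :=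
  fun a => sumC (idx Lam) (fun c => (A a c * v c)%C).

Fixpoint mpow (Lam : nat) (A : mat) (n : nat) : mat :=
  match n with O => idm | S n' => mmul Lam A (mpow Lam A n') end.

Fixpoint expm_partial (Lam : nat) (A : mat) (n : nat) : mat :=
  match n with
  | O => idm
  | S n' => madd (expm_partial Lam A n')
                 (mscale (RtoC (/ INR (fact (S n')))) (mpow Lam A (S n')))
  end.

Definition expm (Lam : nat) (A : mat) : mat :=
  fun a b => (real (Lim_seq (fun n => Re (expm_partial Lam A n a b))),
              real (Lim_seq (fun n => Im (expm_partial Lam A n a b)))).

Definition L3 : mat := fun a b => if ix_eqb a b then RtoC (IZR (snd b)) else 0%C.

Definition Lp : mat := fun a b =>
  let l := Z.of_nat (fst b) in let m := snd b in
  if Nat.eqb (fst a) (fst b) && Z.eqb (snd a) (m + 1)%Z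
  then RtoC (sqrt (IZR ((l - m) * (l + m + 1))))
  else 0%C.

Definition Lm : mat := fun a b =>
  let l := Z.of_nat (fst b) in let m := snd b in
  if Nat.eqb (fst a) (fst b) && Z.eqb (snd a) (m - 1)%Z
  then RtoC (sqrt (IZR ((l + m) * (l - m + 1))))
  else 0%C.

Definition L1 : mat := fun a b => ((Lp a b + Lm a b) / 2)%C.
Definition L2 : mat := fun a b => ((Lp a b - Lm a b) / (2 * Ci))%C.

(* pi_Lambda(g) = e^{i phi L3} e^{i theta L2} e^{i psi L3}, Euler angles *)
Definition piL (Lam : nat) (phi theta psi : R) : mat :=
  mmul Lam (expm Lam (mscale (Ci * RtoC phi) L3))
    (mmul Lam (expm Lam (mscale (Ci * RtoC theta) L2))
              (expm Lam (mscale (Ci * RtoC psi) L3))).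

Definition euler_range (phi theta psi : R) : Prop :=
  0 <= phi < 2 * PI /\ 0 <= theta <= PI /\ 0 <= psi < 2 * PI.

Definition omega_g (Lam : nat) (w : vec) (phi theta psi : R) : vec :=
  mvec Lam (piL Lam phi theta psi) w.

(* matrix of P_g = omega_g <omega_g, .> : entry (a,b) = omega_g(a) * conj(omega_g(b)) *)
Definition Pg (Lam : nat) (w : vec) (phi theta psi : R) : mat :=
  fun a b => (omega_g Lam w phi theta psi a * Cconj (omega_g Lam w phi theta psi b))%C.

(* int_{SO(3)} dmu(g) F(g) with dmu = dphi sin(theta) dtheta dpsi *)
Definition so3_int (F : R -> R -> R -> C) : C :=
  @RInt C_R_CompleteNormedModule (fun phi =>
    @RInt C_R_CompleteNormedModule (fun theta =>
      (RtoC (sin theta) *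
       @RInt C_R_CompleteNormedModule (fun psi => F phi theta psi) 0 (2 * PI))%C)
      0 PI)
    0 (2 * PI).

Definition Uop (v : vec) : vec := fun a => v (fst a, (- snd a)%Z).

(* The matrix entries of [pi_Lambda(g)] factor as
   [e^{i m phi} d(theta)_{(l,m),(l',m')} e^{i m' psi}], where [d(theta) = exp(theta i L2)] is
   real, orthogonal and block diagonal in [l].  The [psi]- and [phi]-integrals of [P_g] force
   [m_c = m_e] and [m_a = m_b], leaving the integrals [S = int_0^PI sin t d_{a c} d_{b e} dt].
   Differentiating [sin t d_{a c} d_{b e}] with the identity
   [(sin t L1 + cos t L3) d(t) = d(t) L3] yields a ladder relation between these integrals
   for neighbouring [m]; it makes the resulting kernel vanish between distinct [l] and be
   constant in [m] on each block, and the orthogonality of [d] together with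
   [int_0^PI sin = 2] fixes that constant through the normalization of [omega].
   For the symmetry, [d_{-a,-c} = (-1)^(m_a + m_c) d_{a c}], so when [omega] is even in [h],
   [U omega_g = omega_g'] with [g' = (PI - phi, theta, PI - psi)] (mod [2 PI]).
   Every identity for [d] is proved by uniqueness for [K' = X K] with [X] antisymmetric,
   whose solutions preserve inner products. *)

From Stdlib Require Import Reals List ZArith Lia Lra Permutation FunctionalExtensionality.
From Coquelicot Require Import Coquelicot.
Open Scope R_scope.

(** * Finite sums and the basis index set *)

Lemma ix_eq_dec (a b : ix) : {a = b} + {a <> b}.
Proof. decide equality; [apply Z.eq_dec | apply Nat.eq_dec]. Qed.

Lemma ix_eqb_spec (a b : ix) : ix_eqb a b = true <-> a = b.
Proof.
  destruct a as [a1 a2], b as [b1 b2]; unfold ix_eqb; simpl.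
  rewrite andb_true_iff, Nat.eqb_eq, Z.eqb_eq.
  split; [intros [-> ->] | intros H; inversion H]; auto.
Qed.

Lemma ix_eqb_refl (a : ix) : ix_eqb a a = true.
Proof. now apply ix_eqb_spec. Qed.

Lemma ix_eqb_neq (a b : ix) : a <> b -> ix_eqb a b = false.
Proof. intros H. destruct (ix_eqb a b) eqn:E; auto. now apply ix_eqb_spec in E. Qed.

Section FiniteSums.
Context {T : Type}.

Lemma sumR_ext (s : list T) f g : (forall x, In x s -> f x = g x) -> sumR s f = sumR s g.
Proof. induction s; simpl; intros H; auto. rewrite H, IHs; auto. Qed.

Lemma sumR_plus (s : list T) f g : sumR s (fun x => f x + g x) = sumR s f + sumR s g.
Proof. induction s; simpl; [ring | rewrite IHs; ring]. Qed.

Lemma sumR_scal (s : list T) k f : sumR s (fun x => k * f x) = k * sumR s f.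
Proof. induction s; simpl; [ring | rewrite IHs; ring]. Qed.

Lemma sumR_0 (s : list T) f : (forall x, In x s -> f x = 0) -> sumR s f = 0.
Proof. induction s; simpl; intros H; auto. rewrite H, IHs; auto; ring. Qed.

Lemma sumR_app (s t : list T) f : sumR (s ++ t) f = sumR s f + sumR t f.
Proof. induction s; simpl; [ring | rewrite IHs; ring]. Qed.

Lemma sumR_single (s : list T) f x0 : NoDup s -> In x0 s ->
  (forall x, In x s -> x <> x0 -> f x = 0) -> sumR s f = f x0.
Proof.
  induction 1 as [|x s Hx Hs IH]; simpl; intros Hin Hf; [tauto|].
  destruct Hin as [<- | Hin].
  - rewrite (sumR_0 s f); [ring|]. intros y Hy. apply Hf; [now right | intros ->; contradiction].
  - rewrite IH, Hf; auto; [ring | congruence].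
Qed.

Lemma sumR_le (s : list T) f g : (forall x, In x s -> f x <= g x) -> sumR s f <= sumR s g.
Proof.
  induction s; simpl; intros H; [lra|].
  pose proof (H a (or_introl eq_refl)). pose proof (IHs (fun x Hx => H x (or_intror Hx))). lra.
Qed.

Lemma sumR_nonneg (s : list T) f : (forall x, In x s -> 0 <= f x) -> 0 <= sumR s f.
Proof. intros H. rewrite <- (sumR_0 s (fun _ => 0)) by auto. now apply sumR_le. Qed.

Lemma sumR_ge_term (s : list T) f x0 :
  (forall x, In x s -> 0 <= f x) -> In x0 s -> f x0 <= sumR s f.
Proof.
  induction s; simpl; intros H Hin; [tauto|].
  pose proof (H a (or_introl eq_refl)).
  pose proof (sumR_nonneg s f (fun x Hx => H x (or_intror Hx))).
  destruct Hin as [<- | Hin]; [lra|].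
  pose proof (IHs (fun x Hx => H x (or_intror Hx)) Hin). lra.
Qed.

Lemma sumR_sq_eq0 (s : list T) f :
  sumR s (fun x => f x ^ 2) = 0 -> forall x, In x s -> f x = 0.
Proof.
  intros H x Hx.
  assert (f x ^ 2 <= 0).
  { rewrite <- H. apply (sumR_ge_term s (fun x => f x ^ 2)); auto. intros; apply pow2_ge_0. }
  pose proof (pow2_ge_0 (f x)). nra.
Qed.

Open Scope C_scope.

Lemma sumC_ext (s : list T) (f g : T -> C) :
  (forall x, In x s -> f x = g x) -> sumC s f = sumC s g.
Proof. induction s; simpl; intros H; auto. rewrite H, IHs; auto. Qed.

Lemma sumC_plus (s : list T) (f g : T -> C) : sumC s (fun x => f x + g x) = sumC s f + sumC s g.
Proof. induction s; simpl; [ring | rewrite IHs; ring]. Qed.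

Lemma sumC_scal (s : list T) k (f : T -> C) : sumC s (fun x => k * f x) = k * sumC s f.
Proof. induction s; simpl; [ring | rewrite IHs; ring]. Qed.

Lemma sumC_0 (s : list T) (f : T -> C) : (forall x, In x s -> f x = 0) -> sumC s f = 0.
Proof. induction s; simpl; intros H; auto. rewrite H, IHs; auto; ring. Qed.

Lemma sumC_single (s : list T) (f : T -> C) x0 : NoDup s -> In x0 s ->
  (forall x, In x s -> x <> x0 -> f x = 0) -> sumC s f = f x0.
Proof.
  induction 1 as [|x s Hx Hs IH]; simpl; intros Hin Hf; [tauto|].
  destruct Hin as [<- | Hin].
  - rewrite (sumC_0 s f); [ring|]. intros y Hy. apply Hf; [now right | intros ->; contradiction].
  - rewrite IH, Hf; auto; [ring | congruence].
Qed.

Lemma sumC_app (s t : list T) (f : T -> C) : sumC (s ++ t) f = sumC s f + sumC t f.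
Proof. induction s; simpl; [ring | rewrite IHs; ring]. Qed.

Lemma sumC_perm (s t : list T) (f : T -> C) : Permutation s t -> sumC s f = sumC t f.
Proof. induction 1; simpl; try ring; congruence. Qed.

Lemma sumC_RtoC (s : list T) (f : T -> R) : sumC s (fun x => RtoC (f x)) = RtoC (sumR s f).
Proof. induction s; simpl; auto. now rewrite IHs, RtoC_plus. Qed.

Lemma sumC_const (s : list T) (x : C) : sumC s (fun _ => x) = RtoC (INR (length s)) * x.
Proof.
  induction s; simpl length; simpl sumC; [now rewrite Cmult_0_l|].
  rewrite IHs, S_INR, RtoC_plus. ring.
Qed.

Lemma Re_sumC (s : list T) (f : T -> C) : Re (sumC s f) = sumR s (fun x => Re (f x)).
Proof. induction s; simpl; auto. now rewrite <- IHs. Qed.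

Lemma Im_sumC (s : list T) (f : T -> C) : Im (sumC s f) = sumR s (fun x => Im (f x)).
Proof. induction s; simpl; auto. now rewrite <- IHs. Qed.

Lemma Cmod_sumC (s : list T) (f : T -> C) : Cmod (sumC s f) <= sumR s (fun x => Cmod (f x)).
Proof.
  induction s; simpl; [rewrite Cmod_0; lra|].
  eapply Rle_trans; [apply Cmod_triangle | lra].
Qed.

Lemma Cconj_sumC (s : list T) (f : T -> C) : Cconj (sumC s f) = sumC s (fun x => Cconj (f x)).
Proof.
  induction s; simpl; [apply injective_projections; simpl; ring|].
  now rewrite Cplus_conj, IHs.
Qed.

End FiniteSums.

Lemma sumR_flat_map {T U : Type} (g : T -> list U) (s : list T) f :
  sumR (flat_map g s) f = sumR s (fun x => sumR (g x) f).
Proof. induction s; simpl; auto. now rewrite sumR_app, IHs. Qed.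

Lemma sumR_map {T U : Type} (g : T -> U) (s : list T) f :
  sumR (map g s) f = sumR s (fun x => f (g x)).
Proof. induction s; simpl; auto. now rewrite IHs. Qed.

Lemma sumC_map {T U : Type} (g : T -> U) (s : list T) (f : U -> C) :
  sumC (map g s) f = sumC s (fun x => f (g x)).
Proof. induction s; simpl; auto. now rewrite IHs. Qed.

Lemma sumR_swap {T U : Type} (s : list T) (t : list U) f :
  sumR s (fun x => sumR t (fun y => f x y)) = sumR t (fun y => sumR s (fun x => f x y)).
Proof. induction s; simpl; [symmetry; now apply sumR_0|]. now rewrite IHs, <- sumR_plus. Qed.

Lemma sumC_swap {T U : Type} (s : list T) (t : list U) (f : T -> U -> C) :
  sumC s (fun x => sumC t (fun y => f x y)) = sumC t (fun y => sumC s (fun x => f x y)).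
Proof. induction s; simpl; [symmetry; now apply sumC_0|]. now rewrite IHs, <- sumC_plus. Qed.

Lemma sumC_list_prod {T U : Type} (s : list T) (t : list U) (f : T * U -> C) :
  sumC (list_prod s t) f = sumC s (fun x => sumC t (fun y => f (x, y))).
Proof. induction s; simpl; auto. now rewrite sumC_app, sumC_map, IHs. Qed.

Lemma sumC_mult {T U : Type} (s : list T) (t : list U) (f : T -> C) (g : U -> C) :
  (sumC s f * sumC t g = sumC s (fun x => sumC t (fun y => f x * g y)))%C.
Proof.
  induction s; simpl; [ring|].
  now rewrite Cmult_plus_distr_r, IHs, <- sumC_scal.
Qed.

Lemma In_mrange l z : In z (mrange l) <-> (- Z.of_nat l <= z <= Z.of_nat l)%Z.
Proof.
  unfold mrange. rewrite in_map_iff. split.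
  - intros [k [<- Hk]]. apply in_seq in Hk. lia.
  - intros H. exists (Z.to_nat (z + Z.of_nat l)). split; [lia|]. apply in_seq. lia.
Qed.

Lemma NoDup_mrange l : NoDup (mrange l).
Proof.
  apply FinFun.Injective_map_NoDup; [|apply seq_NoDup].
  intros x y H. lia.
Qed.

Lemma length_mrange l : length (mrange l) = (2 * l + 1)%nat.
Proof. unfold mrange. now rewrite length_map, length_seq. Qed.

Lemma In_idx Lam a : In a (idx Lam) <-> valid Lam a.
Proof.
  unfold idx, valid. rewrite in_flat_map. split.
  - intros [l [Hl Ha]]. apply in_seq in Hl. apply in_map_iff in Ha.
    destruct Ha as [m [<- Hm]]. apply In_mrange in Hm. simpl. lia.
  - destruct a as [l m]; cbn [fst snd]; intros [H1 H2]. exists l.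
    split; [apply in_seq; lia|].
    apply in_map_iff. exists m. split; auto. now apply In_mrange.
Qed.

Lemma NoDup_idx Lam : NoDup (idx Lam).
Proof.
  unfold idx. generalize 0%nat. induction (S Lam) as [|n IH]; intros s; simpl; [constructor|].
  apply NoDup_app.
  - apply FinFun.Injective_map_NoDup; [intros x y H; now inversion H | apply NoDup_mrange].
  - apply IH.
  - intros x Hx Hx2. apply in_map_iff in Hx. destruct Hx as [m [<- _]].
    apply in_flat_map in Hx2. destruct Hx2 as [l [Hl Hm]]. apply in_seq in Hl.
    apply in_map_iff in Hm. destruct Hm as [m' [Heq _]]. inversion Heq. lia.
Qed.

Lemma sumR_idx Lam (f : ix -> R) :
  sumR (idx Lam) f = sumR (seq 0 (S Lam)) (fun l => sumR (mrange l) (fun m => f (l, m))).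
Proof. unfold idx. rewrite sumR_flat_map. apply sumR_ext. intros. apply sumR_map. Qed.

(** * Power series and the matrix exponential *)

Lemma pow_div_fact_le_exp (y : R) (n : nat) : 0 <= y -> y ^ n / INR (fact n) <= exp y.
Proof.
  intros Hy. eapply Rle_trans; [|apply (exp_ge_taylor y n Hy)].
  destruct n; [simpl; lra|].
  rewrite tech5.
  assert (0 <= sum_f_R0 (fun k => y ^ k / INR (fact k)) n).
  { apply cond_pos_sum. intros k. apply Rmult_le_pos; [now apply pow_le|].
    apply Rlt_le, Rinv_0_lt_compat, INR_fact_lt_0. }
  lra.
Qed.

Lemma CV_radius_factorial_bound (a : nat -> R) (K Q : R) :
  (forall k, Rabs (a k) <= K * Q ^ k / INR (fact k)) ->
  forall t, Rbar_lt (Rabs t) (CV_radius a).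
Proof.
  intros Hb t. apply Rbar_lt_le_trans with (Rabs t + 1); [simpl; lra|].
  apply (proj1 (CV_radius_bounded a)).
  exists (Rabs K * exp (Rabs Q * (Rabs t + 1))). intros n.
  assert (Hr : 0 <= Rabs t + 1) by (pose proof (Rabs_pos t); lra).
  assert (Hf : 0 < / INR (fact n)) by apply Rinv_0_lt_compat, INR_fact_lt_0.
  rewrite Rabs_mult, <- RPow_abs, (Rabs_right (Rabs t + 1)) by lra.
  apply Rle_trans with (Rabs K * ((Rabs Q * (Rabs t + 1)) ^ n / INR (fact n))).
  - eapply Rle_trans; [apply Rmult_le_compat_r; [now apply pow_le | apply Hb]|].
    assert (K * Q ^ n <= Rabs K * Rabs Q ^ n) by (rewrite RPow_abs, <- Rabs_mult; apply Rle_abs).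
    assert (0 <= (Rabs t + 1) ^ n) by now apply pow_le.
    rewrite Rpow_mult_distr. unfold Rdiv.
    replace (Rabs K * (Rabs Q ^ n * (Rabs t + 1) ^ n * / INR (fact n)))
      with (Rabs K * Rabs Q ^ n * / INR (fact n) * (Rabs t + 1) ^ n) by ring.
    apply Rmult_le_compat_r; auto. apply Rmult_le_compat_r; lra.
  - apply Rmult_le_compat_l; [apply Rabs_pos|].
    apply pow_div_fact_le_exp, Rmult_le_pos; auto using Rabs_pos.
Qed.

Lemma ex_pseries_lin (p q : R) (u v : nat -> R) t : ex_pseries u t -> ex_pseries v t ->
  ex_pseries (fun k => p * u k + q * v k) t.
Proof.
  intros Hu Hv. apply (ex_pseries_ext (PS_plus (PS_scal p u) (PS_scal q v))); [reflexivity|].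
  apply ex_pseries_plus; apply ex_pseries_scal; auto; apply Rmult_comm.
Qed.

Lemma PSeries_lin (p q : R) (u v : nat -> R) t : ex_pseries u t -> ex_pseries v t ->
  PSeries (fun k => p * u k + q * v k) t = p * PSeries u t + q * PSeries v t.
Proof.
  intros Hu Hv.
  rewrite (PSeries_ext _ (PS_plus (PS_scal p u) (PS_scal q v))) by reflexivity.
  rewrite PSeries_plus, !PSeries_scal; auto; apply ex_pseries_scal; auto; apply Rmult_comm.
Qed.

Lemma PSeries_sumR_lin {T : Type} (s : list T) (p q : T -> R) (u v : T -> nat -> R) t :
  (forall e, In e s -> ex_pseries (u e) t) -> (forall e, In e s -> ex_pseries (v e) t) ->
  ex_pseries (fun k => sumR s (fun e => p e * u e k + q e * v e k)) t /\
  PSeries (fun k => sumR s (fun e => p e * u e k + q e * v e k)) t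
  = sumR s (fun e => p e * PSeries (u e) t + q e * PSeries (v e) t).
Proof.
  induction s as [|e s IH]; simpl; intros Hu Hv.
  - split; [|apply PSeries_const_0].
    apply (ex_pseries_ext (fun _ => 0)); [reflexivity|].
    apply CV_radius_inside. rewrite CV_radius_const_0. exact I.
  - destruct IH as [IHex IHeq]; auto.
    assert (He := ex_pseries_lin (p e) (q e) (u e) (v e) t
                    (Hu e (or_introl eq_refl)) (Hv e (or_introl eq_refl))).
    split.
    + apply (ex_pseries_ext (PS_plus (fun k => p e * u e k + q e * v e k)
          (fun k => sumR s (fun e => p e * u e k + q e * v e k)))); [reflexivity|].
      now apply ex_pseries_plus.
    + rewrite <- IHeq, <- PSeries_lin by auto.
      apply (PSeries_plus (fun k => p e * u e k + q e * v e k)); auto.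
Qed.

Lemma Rabs_Im_le_Cmod (z : C) : Rabs (Im z) <= Cmod z.
Proof.
  rewrite <- sqrt_Rsqr_abs. apply sqrt_le_1_alt.
  destruct z as [x y]. unfold Rsqr. simpl. nra.
Qed.

Section MatrixExponential.
Variables (Lam : nat) (Z : mat).

Definition expm_t (t : R) : mat := expm Lam (mscale (RtoC t) Z).

Definition taylor_coef (p : C -> R) (a c : ix) (k : nat) : R :=
  p (mpow Lam Z k a c) / INR (fact k).

Lemma mpow_mscale_RtoC t k a c :
  mpow Lam (mscale (RtoC t) Z) k a c = (RtoC (t ^ k) * mpow Lam Z k a c)%C.
Proof.
  revert a c; induction k; intros a c; simpl.
  - now rewrite Cmult_1_l.
  - unfold mmul. rewrite <- sumC_scal. apply sumC_ext. intros e _.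
    rewrite IHk. unfold mscale. rewrite RtoC_mult. ring.
Qed.

Section RealProjection.
Variable p : C -> R.
Hypothesis p_plus : forall x y, p (x + y)%C = p x + p y.
Hypothesis p_scal : forall (r : R) y, p (RtoC r * y)%C = r * p y.

Lemma proj_expm_partial t n a c :
  p (expm_partial Lam (mscale (RtoC t) Z) n a c) = sum_n (fun k => taylor_coef p a c k * t ^ k) n.
Proof.
  induction n.
  - rewrite sum_O. unfold taylor_coef. simpl. field.
  - rewrite sum_Sn.
    change (expm_partial Lam ?A (S n) a c)
      with (expm_partial Lam A n a c + RtoC (/ INR (fact (S n))) * mpow Lam A (S n) a c)%C.
    rewrite p_plus, IHn, p_scal, mpow_mscale_RtoC, p_scal.
    unfold taylor_coef. change plus with Rplus. field. apply INR_fact_neq_0.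
Qed.

End RealProjection.

Lemma Re_expm_t t a c : Re (expm_t t a c) = PSeries (taylor_coef Re a c) t.
Proof.
  unfold expm_t, expm, PSeries, Series. simpl. f_equal. apply Lim_seq_ext. intros n.
  apply proj_expm_partial; [apply re_plus | apply re_scal_l].
Qed.

Lemma Im_expm_t t a c : Im (expm_t t a c) = PSeries (taylor_coef Im a c) t.
Proof.
  unfold expm_t, expm, PSeries, Series. simpl. f_equal. apply Lim_seq_ext. intros n.
  apply proj_expm_partial; [apply im_plus | apply im_scal_l].
Qed.

Definition row_weight (a : ix) : R := 1 + sumR (idx Lam) (fun e => Cmod (Z a e)).
Definition total_weight : R :=
  1 + sumR (idx Lam) (fun a => sumR (idx Lam) (fun e => Cmod (Z a e))).

Lemma row_weight_ge1 a : 1 <= row_weight a.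
Proof.
  unfold row_weight.
  assert (0 <= sumR (idx Lam) (fun e => Cmod (Z a e))) by (apply sumR_nonneg; intros; apply Cmod_ge_0).
  lra.
Qed.

Lemma row_weight_le_total a : In a (idx Lam) -> row_weight a <= total_weight.
Proof.
  intros Ha. apply Rplus_le_compat_l.
  apply (sumR_ge_term (idx Lam) (fun a => sumR (idx Lam) (fun e => Cmod (Z a e)))); auto.
  intros; apply sumR_nonneg; intros; apply Cmod_ge_0.
Qed.

Lemma total_weight_ge1 : 1 <= total_weight.
Proof.
  unfold total_weight.
  assert (0 <= sumR (idx Lam) (fun a => sumR (idx Lam) (fun e => Cmod (Z a e)))).
  { apply sumR_nonneg. intros; apply sumR_nonneg; intros; apply Cmod_ge_0. }
  lra.
Qed.

Lemma Cmod_mpow_le k a c : Cmod (mpow Lam Z k a c) <= row_weight a * total_weight ^ k.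
Proof.
  pose proof total_weight_ge1 as HQ.
  revert a c; induction k; intros a c; simpl mpow.
  - pose proof (row_weight_ge1 a). unfold idm.
    destruct (ix_eqb a c); [rewrite Cmod_1 | rewrite Cmod_0]; simpl; lra.
  - assert (HQk : 0 <= total_weight ^ k) by (apply pow_le; lra).
    unfold mmul. eapply Rle_trans; [apply Cmod_sumC|].
    apply Rle_trans with (sumR (idx Lam) (fun e => (total_weight * total_weight ^ k) * Cmod (Z a e))).
    + apply sumR_le. intros e He. rewrite Cmod_mult, Rmult_comm.
      apply Rmult_le_compat_r; [apply Cmod_ge_0|].
      eapply Rle_trans; [apply IHk|].
      apply Rmult_le_compat_r; [lra | now apply row_weight_le_total].
    + rewrite sumR_scal. unfold row_weight. simpl.
      assert (0 <= total_weight * total_weight ^ k) by (apply Rmult_le_pos; lra).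
      nra.
Qed.

Lemma taylor_coef_radius (p : C -> R) (p_le : forall z, Rabs (p z) <= Cmod z) a c t :
  Rbar_lt (Rabs t) (CV_radius (taylor_coef p a c)).
Proof.
  apply (CV_radius_factorial_bound _ (row_weight a) total_weight). intros k.
  assert (Hf : 0 < / INR (fact k)) by apply Rinv_0_lt_compat, INR_fact_lt_0.
  unfold taylor_coef, Rdiv. rewrite Rabs_mult, (Rabs_right (/ _)) by lra.
  apply Rmult_le_compat_r; [lra|].
  eapply Rle_trans; [apply p_le | apply Cmod_mpow_le].
Qed.

Lemma PS_derive_taylor_coef (p : C -> R)
  (p_sum : forall f, p (sumC (idx Lam) f) = sumR (idx Lam) (fun e => p (f e))) a c k :
  PS_derive (taylor_coef p a c) k
  = sumR (idx Lam) (fun e => / INR (fact k) * p (Z a e * mpow Lam Z k e c)%C).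
Proof.
  unfold PS_derive, taylor_coef. simpl mpow. unfold mmul. rewrite p_sum, sumR_scal.
  rewrite fact_simpl, mult_INR. field. split; [apply INR_fact_neq_0 | apply not_0_INR; lia].
Qed.

Lemma Re_taylor_radius a c t : Rbar_lt (Rabs t) (CV_radius (taylor_coef Re a c)).
Proof. apply taylor_coef_radius, re_le_Cmod. Qed.

Lemma Im_taylor_radius a c t : Rbar_lt (Rabs t) (CV_radius (taylor_coef Im a c)).
Proof. apply taylor_coef_radius, Rabs_Im_le_Cmod. Qed.

Lemma is_derive_Re_expm_t t a c :
  is_derive (fun t => Re (expm_t t a c)) t
    (sumR (idx Lam) (fun e => Re (Z a e) * Re (expm_t t e c) + - Im (Z a e) * Im (expm_t t e c))).
Proof.
  apply (is_derive_ext (PSeries (taylor_coef Re a c))); [intros; now rewrite Re_expm_t|].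
  replace (sumR _ _) with (PSeries (PS_derive (taylor_coef Re a c)) t);
    [apply is_derive_PSeries, Re_taylor_radius|].
  rewrite (PSeries_ext _ (fun k => sumR (idx Lam) (fun e =>
      Re (Z a e) * taylor_coef Re e c k + - Im (Z a e) * taylor_coef Im e c k))).
  2:{ intros k. rewrite PS_derive_taylor_coef by apply Re_sumC.
      apply sumR_ext. intros e _. rewrite re_mult. unfold taylor_coef. field. apply INR_fact_neq_0. }
  rewrite (proj2 (PSeries_sumR_lin _ _ _ _ _ t
    (fun e _ => CV_radius_inside _ _ (Re_taylor_radius e c t))
    (fun e _ => CV_radius_inside _ _ (Im_taylor_radius e c t)))).
  apply sumR_ext. intros e _. now rewrite Re_expm_t, Im_expm_t.
Qed.

Lemma is_derive_Im_expm_t t a c :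
  is_derive (fun t => Im (expm_t t a c)) t
    (sumR (idx Lam) (fun e => Re (Z a e) * Im (expm_t t e c) + Im (Z a e) * Re (expm_t t e c))).
Proof.
  apply (is_derive_ext (PSeries (taylor_coef Im a c))); [intros; now rewrite Im_expm_t|].
  replace (sumR _ _) with (PSeries (PS_derive (taylor_coef Im a c)) t);
    [apply is_derive_PSeries, Im_taylor_radius|].
  rewrite (PSeries_ext _ (fun k => sumR (idx Lam) (fun e =>
      Re (Z a e) * taylor_coef Im e c k + Im (Z a e) * taylor_coef Re e c k))).
  2:{ intros k. rewrite PS_derive_taylor_coef by apply Im_sumC.
      apply sumR_ext. intros e _. rewrite im_mult. unfold taylor_coef. field. apply INR_fact_neq_0. }
  rewrite (proj2 (PSeries_sumR_lin _ _ _ _ _ t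
    (fun e _ => CV_radius_inside _ _ (Im_taylor_radius e c t))
    (fun e _ => CV_radius_inside _ _ (Re_taylor_radius e c t)))).
  apply sumR_ext. intros e _. now rewrite Re_expm_t, Im_expm_t.
Qed.

Lemma expm_t_0 a c : expm_t 0 a c = idm a c.
Proof.
  apply injective_projections; [change (Re (expm_t 0 a c) = Re (idm a c)); rewrite Re_expm_t
                               | change (Im (expm_t 0 a c) = Im (idm a c)); rewrite Im_expm_t];
  rewrite PSeries_0; unfold taylor_coef; simpl; field.
Qed.

Lemma Re_expm_t_eq0 t a c : (forall k, Re (mpow Lam Z k a c) = 0) -> Re (expm_t t a c) = 0.
Proof.
  intros H. rewrite Re_expm_t, (PSeries_ext _ (fun _ => 0)); [apply PSeries_const_0|].
  intros k; unfold taylor_coef; rewrite H; apply Rdiv_0_l.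
Qed.

Lemma Im_expm_t_eq0 t a c : (forall k, Im (mpow Lam Z k a c) = 0) -> Im (expm_t t a c) = 0.
Proof.
  intros H. rewrite Im_expm_t, (PSeries_ext _ (fun _ => 0)); [apply PSeries_const_0|].
  intros k; unfold taylor_coef; rewrite H; apply Rdiv_0_l.
Qed.

End MatrixExponential.

(** * Linear flows with an antisymmetric generator *)

Lemma is_derive_val (f : R -> R) (t l l' : R) : l = l' -> is_derive f t l -> is_derive f t l'.
Proof. now intros ->. Qed.

Lemma is_derive_const_R (k t : R) : is_derive (fun _ => k) t 0.
Proof. apply (is_derive_const (K := R_AbsRing) (V := R_NormedModule)). Qed.

Lemma is_derive_Rplus (f g : R -> R) t df dg : is_derive f t df -> is_derive g t dg ->
  is_derive (fun t => f t + g t) t (df + dg).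
Proof. apply (is_derive_plus f g). Qed.

Lemma is_derive_Rminus (f g : R -> R) t df dg : is_derive f t df -> is_derive g t dg ->
  is_derive (fun t => f t - g t) t (df - dg).
Proof. apply (is_derive_minus f g). Qed.

Lemma is_derive_sumR {T : Type} (s : list T) (f : T -> R -> R) (df : T -> R) t :
  (forall x, In x s -> is_derive (f x) t (df x)) ->
  is_derive (fun t => sumR s (fun x => f x t)) t (sumR s df).
Proof.
  induction s; simpl; intros H.
  - apply is_derive_const_R.
  - apply is_derive_Rplus; auto.
Qed.

Lemma is_derive_0_const (h : R -> R) : (forall t, is_derive h t 0) -> forall t, h t = h 0.
Proof.
  intros H t.
  assert (H1 : is_RInt (fun _ => 0) 0 t (minus (h t) (h 0))).
  { apply (is_RInt_derive h (fun _ => 0)); intros; [apply H | apply continuous_const]. }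
  apply (is_RInt_unique (V := R_CompleteNormedModule)) in H1.
  rewrite RInt_const in H1. unfold minus, plus, opp, scal in H1; simpl in H1.
  unfold mult in H1; simpl in H1. lra.
Qed.

Section AntisymmetricFlow.
Context {T : Type} (s : list T) (A : T -> T -> R).
Hypothesis A_antisym : forall x y, A x y = - A y x.

Definition solves_flow (K : R -> T -> R) : Prop :=
  forall (t : R) x, In x s -> is_derive (fun t => K t x) t (sumR s (fun y => A x y * K t y)).

Lemma sum_antisym_eq0 (u v : T -> R) :
  sumR s (fun x => sumR s (fun y => A x y * (u y * v x + u x * v y))) = 0.
Proof.
  set (S := sumR s (fun x => sumR s (fun y => A x y * (u y * v x + u x * v y)))).
  enough (S = - S) by lra.
  unfold S at 1. rewrite sumR_swap. replace (- S) with (-1 * S) by ring.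
  unfold S. rewrite <- sumR_scal. apply sumR_ext. intros x _.
  rewrite <- sumR_scal. apply sumR_ext. intros y _. rewrite A_antisym. ring.
Qed.

Lemma flow_inner_const K L : solves_flow K -> solves_flow L ->
  forall t, sumR s (fun x => K t x * L t x) = sumR s (fun x => K 0 x * L 0 x).
Proof.
  intros HK HL. apply (is_derive_0_const (fun t => sumR s (fun x => K t x * L t x))). intros t.
  replace 0 with (sumR s (fun x => sumR s (fun y => A x y * K t y) * L t x
                                   + K t x * sumR s (fun y => A x y * L t y))).
  - apply is_derive_sumR. intros x Hx. apply Derive.is_derive_mult; auto.
  - rewrite <- (sum_antisym_eq0 (K t) (L t)). apply sumR_ext. intros x _.
    rewrite Rmult_comm, <- !sumR_scal, <- sumR_plus. apply sumR_ext. intros y _. ring.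
Qed.

Lemma flow_unique K : solves_flow K -> (forall x, In x s -> K 0 x = 0) ->
  forall t x, In x s -> K t x = 0.
Proof.
  intros HK H0 t. apply sumR_sq_eq0.
  rewrite (sumR_ext _ _ (fun x => K t x * K t x)) by (intros; ring).
  rewrite (flow_inner_const K K HK HK t). apply sumR_0. intros x Hx. rewrite H0; auto; ring.
Qed.

End AntisymmetricFlow.

(** * Ladder operators and the Wigner d-matrix *)

Definition lower (a : ix) : ix := (fst a, (snd a - 1)%Z).
Definition raise (a : ix) : ix := (fst a, (snd a + 1)%Z).

Lemma raise_lower a : raise (lower a) = a.
Proof. destruct a; unfold raise, lower; simpl; f_equal; lia. Qed.

Lemma lower_raise a : lower (raise a) = a.
Proof. destruct a; unfold raise, lower; simpl; f_equal; lia. Qed.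

Definition LpR (a b : ix) : R :=
  let l := Z.of_nat (fst b) in let m := snd b in
  if Nat.eqb (fst a) (fst b) && Z.eqb (snd a) (m + 1)%Z
  then sqrt (IZR ((l - m) * (l + m + 1))) else 0.

Definition LmR (a b : ix) : R :=
  let l := Z.of_nat (fst b) in let m := snd b in
  if Nat.eqb (fst a) (fst b) && Z.eqb (snd a) (m - 1)%Z
  then sqrt (IZR ((l + m) * (l - m + 1))) else 0.

Lemma Lp_RtoC a b : Lp a b = RtoC (LpR a b).
Proof. unfold Lp, LpR. now destruct (_ && _). Qed.

Lemma Lm_RtoC a b : Lm a b = RtoC (LmR a b).
Proof. unfold Lm, LmR. now destruct (_ && _). Qed.

Lemma LpR_transpose a b : LpR a b = LmR b a.
Proof.
  destruct a as [la ma], b as [lb mb]; unfold LpR, LmR; simpl.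
  destruct (Nat.eqb_spec la lb), (Z.eqb_spec ma (mb + 1)), (Nat.eqb_spec lb la),
    (Z.eqb_spec mb (ma - 1)); simpl; try lia; auto.
  subst. do 2 f_equal. lia.
Qed.

Lemma LpR_other a e : e <> lower a -> LpR a e = 0.
Proof.
  destruct a as [la ma], e as [le me]; unfold LpR, lower; simpl. intros H.
  destruct (Nat.eqb_spec la le), (Z.eqb_spec ma (me + 1)); simpl; auto.
  subst. exfalso; apply H. f_equal; lia.
Qed.

Lemma LmR_other a e : e <> raise a -> LmR a e = 0.
Proof.
  destruct a as [la ma], e as [le me]; unfold LmR, raise; simpl. intros H.
  destruct (Nat.eqb_spec la le), (Z.eqb_spec ma (me - 1)); simpl; auto.
  subst. exfalso; apply H. f_equal; lia.
Qed.

Definition Lp_into (a : ix) : R := LpR a (lower a).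
Definition Lm_into (a : ix) : R := LmR a (raise a).

Lemma Lp_into_eq a :
  Lp_into a = sqrt (IZR ((Z.of_nat (fst a) - snd a + 1) * (Z.of_nat (fst a) + snd a))).
Proof.
  unfold Lp_into, LpR, lower; simpl. rewrite Nat.eqb_refl.
  replace (snd a - 1 + 1)%Z with (snd a) by lia. rewrite Z.eqb_refl. simpl. do 2 f_equal. lia.
Qed.

Lemma Lm_into_eq a :
  Lm_into a = sqrt (IZR ((Z.of_nat (fst a) + snd a + 1) * (Z.of_nat (fst a) - snd a))).
Proof.
  unfold Lm_into, LmR, raise; simpl. rewrite Nat.eqb_refl.
  replace (snd a + 1 - 1)%Z with (snd a) by lia. rewrite Z.eqb_refl. simpl. do 2 f_equal. lia.
Qed.

Lemma Lm_into_lower a : Lm_into (lower a) = Lp_into a.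
Proof. rewrite Lm_into_eq, Lp_into_eq. unfold lower; simpl. do 2 f_equal. lia. Qed.

Lemma Lp_into_raise a : Lp_into (raise a) = Lm_into a.
Proof. rewrite Lm_into_eq, Lp_into_eq. unfold raise; simpl. do 2 f_equal. lia. Qed.

Section LadderOnIdx.
Variable Lam : nat.

Lemma Lp_into_sq a : In a (idx Lam) ->
  Lp_into a * Lp_into a = IZR ((Z.of_nat (fst a) - snd a + 1) * (Z.of_nat (fst a) + snd a)).
Proof.
  rewrite In_idx; intros [H1 H2]. rewrite Lp_into_eq, sqrt_sqrt; [reflexivity|].
  apply IZR_le, Z.mul_nonneg_nonneg; lia.
Qed.

Lemma Lm_into_sq a : In a (idx Lam) ->
  Lm_into a * Lm_into a = IZR ((Z.of_nat (fst a) + snd a + 1) * (Z.of_nat (fst a) - snd a)).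
Proof.
  rewrite In_idx; intros [H1 H2]. rewrite Lm_into_eq, sqrt_sqrt; [reflexivity|].
  apply IZR_le, Z.mul_nonneg_nonneg; lia.
Qed.

Lemma lower_in_or a : In a (idx Lam) -> In (lower a) (idx Lam) \/ Lp_into a = 0.
Proof.
  intros Ha. destruct (In_dec ix_eq_dec (lower a) (idx Lam)) as [|Hn]; [now left | right].
  rewrite In_idx in Ha, Hn. unfold valid, lower in *; simpl in *.
  rewrite Lp_into_eq. replace (Z.of_nat (fst a) + snd a)%Z with 0%Z by lia.
  rewrite Z.mul_0_r. apply sqrt_0.
Qed.

Lemma raise_in_or a : In a (idx Lam) -> In (raise a) (idx Lam) \/ Lm_into a = 0.
Proof.
  intros Ha. destruct (In_dec ix_eq_dec (raise a) (idx Lam)) as [|Hn]; [now left | right].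
  rewrite In_idx in Ha, Hn. unfold valid, raise in *; simpl in *.
  rewrite Lm_into_eq. replace (Z.of_nat (fst a) - snd a)%Z with 0%Z by lia.
  rewrite Z.mul_0_r. apply sqrt_0.
Qed.

Lemma sum_LpR a (v : ix -> R) : In a (idx Lam) ->
  sumR (idx Lam) (fun e => LpR a e * v e) = Lp_into a * v (lower a).
Proof.
  intros Ha. destruct (lower_in_or a Ha) as [Hi | H0].
  - rewrite (sumR_single _ _ (lower a)); auto using NoDup_idx.
    intros e _ He. rewrite LpR_other; auto; ring.
  - rewrite H0, Rmult_0_l. apply sumR_0. intros e _.
    destruct (ix_eq_dec e (lower a)) as [->|He].
    + change (Lp_into a * v (lower a) = 0). rewrite H0; ring.
    +
    rewrite LpR_other; auto; ring.
Qed.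

Lemma sum_LmR a (v : ix -> R) : In a (idx Lam) ->
  sumR (idx Lam) (fun e => LmR a e * v e) = Lm_into a * v (raise a).
Proof.
  intros Ha. destruct (raise_in_or a Ha) as [Hi | H0].
  - rewrite (sumR_single _ _ (raise a)); auto using NoDup_idx.
    intros e _ He. rewrite LmR_other; auto; ring.
  - rewrite H0, Rmult_0_l. apply sumR_0. intros e _.
    destruct (ix_eq_dec e (raise a)) as [->|He].
    + change (Lm_into a * v (raise a) = 0). rewrite H0; ring.
    +
    rewrite LmR_other; auto; ring.
Qed.

End LadderOnIdx.

Definition X2 (a b : ix) : R := (LpR a b - LmR a b) / 2.
Definition X2C : mat := fun a b => RtoC (X2 a b).

Lemma mscale_iL2 t : mscale (Ci * RtoC t) L2 = mscale (RtoC t) X2C.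
Proof.
  apply functional_extensionality; intros a; apply functional_extensionality; intros b.
  unfold mscale, X2C, X2, L2. rewrite Lp_RtoC, Lm_RtoC.
  apply injective_projections; simpl; field.
Qed.

Lemma X2_antisym a b : X2 a b = - X2 b a.
Proof. unfold X2. rewrite (LpR_transpose a b), (LpR_transpose b a). lra. Qed.

Lemma sum_X2 Lam a (v : ix -> R) : In a (idx Lam) ->
  sumR (idx Lam) (fun e => X2 a e * v e) = (Lp_into a * v (lower a) - Lm_into a * v (raise a)) / 2.
Proof.
  intros Ha. unfold X2.
  rewrite (sumR_ext _ _ (fun e => / 2 * (LpR a e * v e) + (- / 2) * (LmR a e * v e))) by (intros; field).
  rewrite sumR_plus, !sumR_scal, sum_LpR, sum_LmR by auto. field.
Qed.

Definition wigner_d (Lam : nat) (t : R) (a c : ix) : R := Re (expm_t Lam X2C t a c).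

Section WignerD.
Variable Lam : nat.
Notation d := (wigner_d Lam).

Lemma Im_mpow_X2C k a c : Im (mpow Lam X2C k a c) = 0.
Proof.
  revert a c; induction k; intros a c; simpl mpow.
  - unfold idm. now destruct (ix_eqb a c).
  - unfold mmul. rewrite Im_sumC. apply sumR_0. intros e _.
    rewrite im_mult, IHk. unfold X2C. simpl. ring.
Qed.

Lemma expm_t_X2C t a c : expm_t Lam X2C t a c = RtoC (d t a c).
Proof.
  apply injective_projections; [reflexivity|].
  apply (Im_expm_t_eq0 Lam X2C). intros; apply Im_mpow_X2C.
Qed.

Lemma wigner_d_0 a c : d 0 a c = if ix_eqb a c then 1 else 0.
Proof. unfold wigner_d. rewrite expm_t_0. unfold idm. now destruct (ix_eqb a c). Qed.

Lemma is_derive_wigner_d_sum t a c :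
  is_derive (fun t => d t a c) t (sumR (idx Lam) (fun e => X2 a e * d t e c)).
Proof.
  unfold wigner_d.
  replace (sumR _ _) with (sumR (idx Lam) (fun e => Re (X2C a e) * Re (expm_t Lam X2C t e c)
                                            + - Im (X2C a e) * Im (expm_t Lam X2C t e c))).
  - apply is_derive_Re_expm_t.
  - apply sumR_ext. intros e _. unfold X2C. simpl. ring.
Qed.

Lemma wigner_d_flow c : solves_flow (idx Lam) X2 (fun t a => d t a c).
Proof. intros t a _. apply is_derive_wigner_d_sum. Qed.

Lemma is_derive_wigner_d t a c : In a (idx Lam) ->
  is_derive (fun t => d t a c) t ((Lp_into a * d t (lower a) c - Lm_into a * d t (raise a) c) / 2).
Proof. intros Ha. rewrite <- (sum_X2 Lam a (fun e => d t e c)) by auto. now apply wigner_d_flow. Qed.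

Lemma wigner_d_continuous a c t : continuous (fun t => d t a c) t.
Proof.
  apply (ex_derive_continuous (K := R_AbsRing) (V := R_NormedModule)).
  eexists. apply is_derive_Re_expm_t.
Qed.

Lemma wigner_d_orthonormal t c e : In c (idx Lam) -> In e (idx Lam) ->
  sumR (idx Lam) (fun a => d t a c * d t a e) = if ix_eqb c e then 1 else 0.
Proof.
  intros Hc He.
  rewrite (flow_inner_const (idx Lam) X2 X2_antisym _ _ (wigner_d_flow c) (wigner_d_flow e) t).
  rewrite (sumR_single _ _ c); auto using NoDup_idx.
  - rewrite !wigner_d_0, ix_eqb_refl. ring.
  - intros x _ Hx. rewrite wigner_d_0, ix_eqb_neq by auto. ring.
Qed.

Lemma mpow_X2C_block k a c : fst a <> fst c -> mpow Lam X2C k a c = 0%C.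
Proof.
  revert a; induction k; intros a H; simpl mpow.
  - unfold idm. rewrite ix_eqb_neq; auto. intros ->. tauto.
  - unfold mmul. apply sumC_0. intros e _.
    destruct (Nat.eq_dec (fst e) (fst a)).
    + rewrite IHk by congruence. apply Cmult_0_r.
    + unfold X2C, X2, LpR, LmR. destruct (Nat.eqb_spec (fst a) (fst e)); [congruence|]. simpl.
      unfold Rdiv. rewrite Rminus_diag, Rmult_0_l. apply Cmult_0_l.
Qed.

Lemma wigner_d_block t a c : fst a <> fst c -> d t a c = 0.
Proof. intros H. apply Re_expm_t_eq0. intros k. now rewrite mpow_X2C_block. Qed.

(* [sum_X2] at [lower a] needs [lower a] in [idx Lam]; otherwise the prefactor vanishes. *)
Lemma Lp_into_sum_X2_lower t a c : In a (idx Lam) ->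
  Lp_into a * sumR (idx Lam) (fun e => X2 (lower a) e * d t e c)
  = Lp_into a * ((Lp_into (lower a) * d t (lower (lower a)) c - Lm_into (lower a) * d t a c) / 2).
Proof.
  intros Ha. destruct (lower_in_or Lam a Ha) as [H | ->]; [|ring].
  now rewrite sum_X2, raise_lower.
Qed.

Lemma Lm_into_sum_X2_raise t a c : In a (idx Lam) ->
  Lm_into a * sumR (idx Lam) (fun e => X2 (raise a) e * d t e c)
  = Lm_into a * ((Lp_into (raise a) * d t a c - Lm_into (raise a) * d t (raise (raise a)) c) / 2).
Proof.
  intros Ha. destruct (raise_in_or Lam a Ha) as [H | ->]; [|ring].
  now rewrite sum_X2, lower_raise.
Qed.

(* Column [c] of [(sin t L1 + cos t L3) d(t) - d(t) L3]; it vanishes because conjugating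
   by the rotation [d(t)] about the 2-axis turns [L3] into [sin t L1 + cos t L3]. *)
Definition ladder_defect (c : ix) (t : R) (a : ix) : R :=
  sin t * (Lp_into a * d t (lower a) c + Lm_into a * d t (raise a) c) / 2
  - (cos t * IZR (snd a) - IZR (snd c)) * d t a c.

Lemma ladder_defect_flow c : solves_flow (idx Lam) X2 (ladder_defect c).
Proof.
  intros t a Ha. unfold ladder_defect.
  eapply is_derive_val.
  2:{ apply is_derive_Rminus.
      - apply Derive.is_derive_mult; [|apply is_derive_const_R].
        apply Derive.is_derive_mult; [apply is_derive_sin|].
        apply is_derive_Rplus; (apply Derive.is_derive_mult; [apply is_derive_const_R|]);
          apply is_derive_wigner_d_sum.
      - apply Derive.is_derive_mult; [|apply is_derive_wigner_d_sum].
        apply is_derive_Rminus; [|apply is_derive_const_R].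
        apply Derive.is_derive_mult; [apply is_derive_cos | apply is_derive_const_R]. }
  cbv beta. rewrite Lp_into_sum_X2_lower, Lm_into_sum_X2_raise, !(sum_X2 Lam a) by auto.
  replace (IZR (snd (lower a))) with (IZR (snd a) - 1) by (simpl; now rewrite minus_IZR).
  replace (IZR (snd (raise a))) with (IZR (snd a) + 1) by (simpl; now rewrite plus_IZR).
  assert (HP := Lp_into_sq Lam a Ha). assert (HM := Lm_into_sq Lam a Ha).
  rewrite !mult_IZR, !plus_IZR, !minus_IZR in HP, HM.
  rewrite raise_lower, lower_raise, Lm_into_lower, Lp_into_raise.
  apply Rminus_diag_uniq.
  transitivity (sin t * d t a c
                * (- (Lp_into a * Lp_into a) / 2 + Lm_into a * Lm_into a / 2 + IZR (snd a)));
    [field|].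
  rewrite HP, HM. field.
Qed.

Lemma wigner_d_ladder t a c : In a (idx Lam) -> In c (idx Lam) ->
  sin t * (Lp_into a * d t (lower a) c + Lm_into a * d t (raise a) c) / 2
  = (cos t * IZR (snd a) - IZR (snd c)) * d t a c.
Proof.
  intros Ha Hc. apply Rminus_diag_uniq.
  apply (flow_unique (idx Lam) X2 X2_antisym (ladder_defect c) (ladder_defect_flow c)); auto.
  intros x Hx. unfold ladder_defect. rewrite sin_0, cos_0, (wigner_d_0 x c).
  destruct (ix_eqb x c) eqn:E; [apply ix_eqb_spec in E; subst|]; lra.
Qed.
End WignerD.

(** * The integrals [int_0^PI sin t d(t)_{a c} d(t)_{b e} dt] *)

Lemma continuous_Rmult (f g : R -> R) t :
  continuous f t -> continuous g t -> continuous (fun t => f t * g t) t.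
Proof. apply (continuous_mult f g). Qed.

Lemma continuous_Rminus (f g : R -> R) t :
  continuous f t -> continuous g t -> continuous (fun t => f t - g t) t.
Proof. apply (continuous_minus (K := R_AbsRing) (V := R_NormedModule) f g). Qed.

Lemma continuous_const_R (k t : R) : continuous (fun _ => k) t.
Proof. apply (continuous_const (U := R_UniformSpace) (V := R_UniformSpace)). Qed.

Lemma is_RInt_Rplus (f g : R -> R) a b If Ig :
  is_RInt f a b If -> is_RInt g a b Ig -> is_RInt (fun t => f t + g t) a b (If + Ig).
Proof. apply (is_RInt_plus (V := R_NormedModule)). Qed.

Lemma is_RInt_Rminus (f g : R -> R) a b If Ig :
  is_RInt f a b If -> is_RInt g a b Ig -> is_RInt (fun t => f t - g t) a b (If - Ig).
Proof. apply (is_RInt_minus (V := R_NormedModule)). Qed.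

Lemma is_RInt_Rscal (f : R -> R) a b k If :
  is_RInt f a b If -> is_RInt (fun t => k * f t) a b (k * If).
Proof. apply (is_RInt_scal (V := R_NormedModule)). Qed.

Lemma is_RInt_Rconst (k a b : R) : is_RInt (fun _ => k) a b ((b - a) * k).
Proof. apply (is_RInt_const (V := R_NormedModule)). Qed.

Lemma is_RInt_R_val (f : R -> R) (a b l l' : R) : l = l' -> is_RInt f a b l -> is_RInt f a b l'.
Proof. now intros ->. Qed.

Lemma is_RInt_R0 (a b : R) : is_RInt (fun _ => 0) a b 0.
Proof. pose proof (is_RInt_Rconst 0 a b) as H. now rewrite Rmult_0_r in H. Qed.

Lemma is_RInt_R_unique (f : R -> R) a b I1 I2 : is_RInt f a b I1 -> is_RInt f a b I2 -> I1 = I2.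
Proof.
  intros H1 H2. apply (is_RInt_unique (V := R_CompleteNormedModule)) in H1, H2. congruence.
Qed.

Lemma is_RInt_sumR {T : Type} (s : list T) (f : T -> R -> R) (I : T -> R) a b :
  (forall x, In x s -> is_RInt (f x) a b (I x)) ->
  is_RInt (fun t => sumR s (fun x => f x t)) a b (sumR s I).
Proof.
  induction s; simpl; intros H.
  - apply is_RInt_R0.
  - apply is_RInt_Rplus; auto.
Qed.

Lemma is_RInt_RInt_continuous (f : R -> R) a b :
  (forall t, continuous f t) -> is_RInt f a b (RInt f a b).
Proof.
  intros H. apply (RInt_correct (V := R_CompleteNormedModule)).
  apply (ex_RInt_continuous (V := R_CompleteNormedModule)). auto.
Qed.

Lemma is_RInt_derive_R (f df : R -> R) a b :
  (forall t, is_derive f t (df t)) -> (forall t, continuous df t) -> is_RInt df a b (f b - f a).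
Proof. intros H1 H2. apply (is_RInt_derive (V := R_CompleteNormedModule)); auto. Qed.

Lemma is_RInt_sin_0_PI : is_RInt sin 0 PI 2.
Proof.
  replace 2 with (- cos PI - - cos 0) by (rewrite cos_PI, cos_0; ring).
  apply (is_RInt_derive_R (fun t => - cos t)); [|intros; apply continuous_sin].
  intros t. auto_derive; auto; ring.
Qed.

Section WignerOverlap.
Variable Lam : nat.
Notation d := (wigner_d Lam).

Definition overlap_density (c1 c2 a b : ix) (t : R) : R := sin t * d t a c1 * d t b c2.
Definition wigner_overlap (c1 c2 a b : ix) : R := RInt (overlap_density c1 c2 a b) 0 PI.

Lemma overlap_density_continuous c1 c2 a b t : continuous (overlap_density c1 c2 a b) t.
Proof.
  unfold overlap_density.
  repeat apply continuous_Rmult; auto using continuous_sin, wigner_d_continuous.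
Qed.

Lemma is_RInt_wigner_overlap c1 c2 a b :
  is_RInt (overlap_density c1 c2 a b) 0 PI (wigner_overlap c1 c2 a b).
Proof. apply is_RInt_RInt_continuous, overlap_density_continuous. Qed.

Lemma is_derive_overlap_density (t : R) a b c1 c2 :
  In a (idx Lam) -> In b (idx Lam) -> In c1 (idx Lam) -> In c2 (idx Lam) ->
  snd a = (snd b + 1)%Z -> snd c1 = snd c2 ->
  is_derive (fun t => sin t * d t a c1 * d t b c2) t
    (Lp_into a * overlap_density c1 c2 (lower a) b t - Lm_into b * overlap_density c1 c2 a (raise b) t).
Proof.
  intros Ha Hb Hc1 Hc2 Hab Hc.
  eapply is_derive_val.
  2:{ apply Derive.is_derive_mult; [apply Derive.is_derive_mult; [apply is_derive_sin|] |];
      apply is_derive_wigner_d; auto. }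
  assert (Fa := wigner_d_ladder Lam t a c1 Ha Hc1).
  assert (Fb := wigner_d_ladder Lam t b c2 Hb Hc2).
  unfold overlap_density.
  transitivity (cos t * d t a c1 * d t b c2
    - (sin t * (Lp_into a * d t (lower a) c1 + Lm_into a * d t (raise a) c1) / 2) * d t b c2
    + d t a c1 * (sin t * (Lp_into b * d t (lower b) c2 + Lm_into b * d t (raise b) c2) / 2)
    + sin t * (Lp_into a * d t (lower a) c1 * d t b c2 - Lm_into b * d t a c1 * d t (raise b) c2));
    [field|].
  rewrite Fa, Fb, Hab, Hc, plus_IZR. ring.
Qed.

Lemma wigner_overlap_ladder a b c1 c2 :
  In a (idx Lam) -> In b (idx Lam) -> In c1 (idx Lam) -> In c2 (idx Lam) ->
  snd a = (snd b + 1)%Z -> snd c1 = snd c2 ->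
  Lp_into a * wigner_overlap c1 c2 (lower a) b = Lm_into b * wigner_overlap c1 c2 a (raise b).
Proof.
  intros Ha Hb Hc1 Hc2 Hab Hc. apply Rminus_diag_uniq.
  apply (is_RInt_R_unique (fun t => Lp_into a * overlap_density c1 c2 (lower a) b t
                                   - Lm_into b * overlap_density c1 c2 a (raise b) t) 0 PI).
  - apply is_RInt_Rminus; apply is_RInt_Rscal, is_RInt_wigner_overlap.
  - assert (H := is_RInt_derive_R (fun t => sin t * d t a c1 * d t b c2) _ 0 PI
      (fun t => is_derive_overlap_density t a b c1 c2 Ha Hb Hc1 Hc2 Hab Hc)).
    cbv beta in H. rewrite sin_PI, sin_0, !Rmult_0_l, Rminus_0_r in H. apply H.
    intros t. apply continuous_Rminus; apply continuous_Rmult;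
      auto using continuous_const_R, overlap_density_continuous.
Qed.

Lemma sum_wigner_d_block t l c1 c2 : In c1 (idx Lam) -> In c2 (idx Lam) -> (l <= Lam)%nat ->
  sumR (mrange l) (fun m => d t (l, m) c1 * d t (l, m) c2)
  = if Nat.eqb l (fst c1) then (if ix_eqb c1 c2 then 1 else 0) else 0.
Proof.
  intros Hc1 Hc2 Hl. destruct (Nat.eqb_spec l (fst c1)) as [->|Hne].
  - rewrite <- (wigner_d_orthonormal Lam t c1 c2) by auto. rewrite sumR_idx.
    rewrite (sumR_single _ _ (fst c1)); [reflexivity | apply seq_NoDup | apply in_seq; lia|].
    intros l' _ Hl'. apply sumR_0. intros m _. rewrite wigner_d_block; [ring | simpl; congruence].
  - apply sumR_0. intros m _. rewrite wigner_d_block; [ring | simpl; congruence].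
Qed.

Lemma sum_wigner_overlap_diag l c1 c2 : In c1 (idx Lam) -> In c2 (idx Lam) -> (l <= Lam)%nat ->
  sumR (mrange l) (fun m => wigner_overlap c1 c2 (l, m) (l, m))
  = 2 * (if Nat.eqb l (fst c1) then (if ix_eqb c1 c2 then 1 else 0) else 0).
Proof.
  intros Hc1 Hc2 Hl.
  apply (is_RInt_R_unique
           (fun t => sumR (mrange l) (fun m => overlap_density c1 c2 (l, m) (l, m) t)) 0 PI).
  - apply is_RInt_sumR. intros; apply is_RInt_wigner_overlap.
  - rewrite Rmult_comm.
    apply (is_RInt_ext (V := R_NormedModule)
      (fun t => (if Nat.eqb l (fst c1) then (if ix_eqb c1 c2 then 1 else 0) else 0) * sin t)).
    + intros t _. rewrite <- (sum_wigner_d_block t l c1 c2) by auto.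
      rewrite Rmult_comm, <- sumR_scal. apply sumR_ext. intros; unfold overlap_density; ring.
    + apply is_RInt_Rscal, is_RInt_sin_0_PI.
Qed.

End WignerOverlap.

(** * Matrix entries of [pi_Lambda(g)] *)

Lemma rotation_ode_solution (m : R) (f g : R -> R) :
  (forall t, is_derive f t (- m * g t)) -> (forall t, is_derive g t (m * f t)) ->
  f 0 = 1 -> g 0 = 0 -> forall t, f t = cos (m * t) /\ g t = sin (m * t).
Proof.
  intros Hf Hg Hf0 Hg0 t.
  set (h := fun t => (f t - cos (m * t)) ^ 2 + (g t - sin (m * t)) ^ 2).
  assert (Hh : forall t, is_derive h t 0).
  { intros s. unfold h. eapply is_derive_val.
    2:{ apply is_derive_Rplus; apply is_derive_pow; apply is_derive_Rminus; auto;
        auto_derive; auto. }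
    simpl. ring. }
  assert (H0 := is_derive_0_const h Hh t). unfold h in H0.
  rewrite Hf0, Hg0, Rmult_0_r, cos_0, sin_0 in H0.
  assert (Hc : (f t - cos (m * t)) ^ 2 + (g t - sin (m * t)) ^ 2 = 0) by (rewrite H0; ring).
  pose proof (pow2_ge_0 (f t - cos (m * t))). pose proof (pow2_ge_0 (g t - sin (m * t))).
  split; nra.
Qed.

Definition cis (x : R) : C := (cos x, sin x).

Definition X3C : mat := mscale Ci L3.

Lemma mscale_iL3 t : mscale (Ci * RtoC t) L3 = mscale (RtoC t) X3C.
Proof.
  apply functional_extensionality; intros a; apply functional_extensionality; intros b.
  unfold X3C, mscale. ring.
Qed.

Lemma X3C_off a b : a <> b -> X3C a b = 0%C.
Proof. intros H. unfold X3C, mscale, L3. rewrite ix_eqb_neq; auto. ring. Qed.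

Lemma X3C_diag a : X3C a a = (0, IZR (snd a)).
Proof. unfold X3C, mscale, L3. rewrite ix_eqb_refl. apply injective_projections; simpl; ring. Qed.

Section DiagonalExponential.
Variable Lam : nat.

Lemma mpow_X3C_off k a c : a <> c -> mpow Lam X3C k a c = 0%C.
Proof.
  revert a; induction k; intros a H; simpl mpow.
  - unfold idm. now rewrite ix_eqb_neq.
  - unfold mmul. apply sumC_0. intros e _. destruct (ix_eq_dec a e) as [<-|Hne].
    + rewrite IHk; auto. ring.
    + rewrite X3C_off; auto. ring.
Qed.

Lemma expm_t_X3C_off t a c : a <> c -> expm_t Lam X3C t a c = 0%C.
Proof.
  intros H. apply injective_projections.
  - apply Re_expm_t_eq0. intros; now rewrite mpow_X3C_off.
  - apply Im_expm_t_eq0. intros; now rewrite mpow_X3C_off.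
Qed.

Lemma expm_t_X3C_diag t a : In a (idx Lam) -> expm_t Lam X3C t a a = cis (IZR (snd a) * t).
Proof.
  intros Ha.
  assert (Hoff : forall e, In e (idx Lam) -> e <> a -> X3C a e = 0%C) by (intros; apply X3C_off; auto).
  destruct (rotation_ode_solution (IZR (snd a))
              (fun t => Re (expm_t Lam X3C t a a)) (fun t => Im (expm_t Lam X3C t a a))) with t
    as [Hre Him].
  - intros s. eapply is_derive_val; [|apply is_derive_Re_expm_t].
    rewrite (sumR_single _ _ a); auto using NoDup_idx.
    + rewrite X3C_diag. simpl. ring.
    + intros e He Hne. rewrite Hoff by auto. simpl. ring.
  - intros s. eapply is_derive_val; [|apply is_derive_Im_expm_t].
    rewrite (sumR_single _ _ a); auto using NoDup_idx.
    + rewrite X3C_diag. simpl. ring.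
    + intros e He Hne. rewrite Hoff by auto. simpl. ring.
  - cbv beta. rewrite expm_t_0. unfold idm. now rewrite ix_eqb_refl.
  - cbv beta. rewrite expm_t_0. unfold idm. now rewrite ix_eqb_refl.
  - now apply injective_projections.
Qed.

End DiagonalExponential.

Lemma piL_entry Lam phi theta psi a c : In a (idx Lam) -> In c (idx Lam) ->
  piL Lam phi theta psi a c
  = (cis (IZR (snd a) * phi) * RtoC (wigner_d Lam theta a c) * cis (IZR (snd c) * psi))%C.
Proof.
  intros Ha Hc. unfold piL. rewrite !mscale_iL3, mscale_iL2.
  fold (expm_t Lam X3C phi) (expm_t Lam X3C psi) (expm_t Lam X2C theta).
  unfold mmul at 1. rewrite (sumC_single _ _ a); auto using NoDup_idx.
  2:{ intros e _ He. rewrite expm_t_X3C_off by auto. ring. }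
  unfold mmul. rewrite (sumC_single _ _ c); auto using NoDup_idx.
  2:{ intros e _ He. rewrite (expm_t_X3C_off Lam psi e c) by auto. ring. }
  rewrite !expm_t_X3C_diag, expm_t_X2C by auto. ring.
Qed.

Lemma omega_g_entry Lam w phi theta psi a : In a (idx Lam) ->
  omega_g Lam w phi theta psi a
  = sumC (idx Lam) (fun c =>
      cis (IZR (snd a) * phi) * RtoC (wigner_d Lam theta a c) * cis (IZR (snd c) * psi) * w c)%C.
Proof. intros Ha. unfold omega_g, mvec. apply sumC_ext. intros c Hc. now rewrite piL_entry. Qed.

(** * The resolution of the identity *)

Definition is_RInt_C (f : R -> C) (a b : R) (l : C) : Prop := is_RInt (V := C_R_NormedModule) f a b l.

Lemma is_RInt_C_pair (f : R -> C) a b lr li :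
  is_RInt (fun t => Re (f t)) a b lr -> is_RInt (fun t => Im (f t)) a b li -> is_RInt_C f a b (lr, li).
Proof. apply (is_RInt_fct_extend_pair (U := R_NormedModule) (V := R_NormedModule)). Qed.

Lemma is_RInt_C_Re (f : R -> C) a b l : is_RInt_C f a b l -> is_RInt (fun t => Re (f t)) a b (Re l).
Proof. apply (is_RInt_fct_extend_fst (U := R_NormedModule) (V := R_NormedModule)). Qed.

Lemma is_RInt_C_Im (f : R -> C) a b l : is_RInt_C f a b l -> is_RInt (fun t => Im (f t)) a b (Im l).
Proof. apply (is_RInt_fct_extend_snd (U := R_NormedModule) (V := R_NormedModule)). Qed.

Lemma is_RInt_C_ext (f g : R -> C) a b l :
  (forall t, f t = g t) -> is_RInt_C f a b l -> is_RInt_C g a b l.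
Proof. intros H. apply (is_RInt_ext (V := C_R_NormedModule)). auto. Qed.

Lemma is_RInt_C_unique (f : R -> C) a b l :
  is_RInt_C f a b l -> RInt (V := C_R_CompleteNormedModule) f a b = l.
Proof. apply (is_RInt_unique (V := C_R_CompleteNormedModule)). Qed.

Lemma is_RInt_C_scal (f : R -> C) a b (k l : C) :
  is_RInt_C f a b l -> is_RInt_C (fun t => k * f t)%C a b (k * l)%C.
Proof.
  intros H. assert (Hr := is_RInt_C_Re _ _ _ _ H). assert (Hi := is_RInt_C_Im _ _ _ _ H).
  replace (k * l)%C with (Re k * Re l - Im k * Im l, Re k * Im l + Im k * Re l)
    by (apply injective_projections; symmetry; [apply re_mult | apply im_mult]).
  apply is_RInt_C_pair.
  - apply (is_RInt_ext (V := R_NormedModule) (fun t => Re k * Re (f t) - Im k * Im (f t))).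
    + intros t _. symmetry. apply re_mult.
    + apply is_RInt_Rminus; apply is_RInt_Rscal; auto.
  - apply (is_RInt_ext (V := R_NormedModule) (fun t => Re k * Im (f t) + Im k * Re (f t))).
    + intros t _. symmetry. apply im_mult.
    + apply is_RInt_Rplus; apply is_RInt_Rscal; auto.
Qed.

Lemma is_RInt_C_sumC {T : Type} (s : list T) (f : T -> R -> C) (I : T -> C) a b :
  (forall x, In x s -> is_RInt_C (f x) a b (I x)) ->
  is_RInt_C (fun t => sumC s (fun x => f x t)) a b (sumC s I).
Proof.
  induction s; simpl; intros H.
  - apply (is_RInt_C_pair _ a b 0 0); apply is_RInt_R0.
  - apply (is_RInt_plus (V := C_R_NormedModule)); [apply H; now left|].
    apply IHs. intros; apply H; now right.
Qed.

Lemma is_RInt_C_RtoC (f : R -> R) a b l :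
  is_RInt f a b l -> is_RInt_C (fun t => RtoC (f t)) a b (RtoC l).
Proof. intros H. apply is_RInt_C_pair; simpl; auto. apply is_RInt_R0. Qed.

Lemma sin_k2pi (k : Z) : sin (IZR k * (2 * PI)) = 0.
Proof. apply sin_eq_0_1. exists (2 * k)%Z. rewrite mult_IZR. ring. Qed.

Lemma cos_k2pi (k : Z) : cos (IZR k * (2 * PI)) = 1.
Proof.
  replace (IZR k * (2 * PI)) with (2 * (IZR k * PI)) by ring.
  rewrite cos_2a_sin, sin_eq_0_1; [ring | now exists k].
Qed.

Definition cis_integral (k : Z) : C := if Z.eqb k 0 then RtoC (2 * PI) else 0%C.

Lemma is_RInt_cis (k : Z) : is_RInt_C (fun t => cis (IZR k * t)) 0 (2 * PI) (cis_integral k).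
Proof.
  unfold cis_integral. destruct (Z.eqb_spec k 0) as [->|Hk].
  - apply (is_RInt_C_ext (fun _ => RtoC 1)).
    + intros; unfold cis. now rewrite Rmult_0_l, cos_0, sin_0.
    + replace (2 * PI) with ((2 * PI - 0) * 1) at 2 by ring.
      apply is_RInt_C_RtoC, is_RInt_Rconst.
  - assert (Hk' : IZR k <> 0) by now apply not_0_IZR.
    assert (Hlin : forall t, continuous (fun t => IZR k * t) t).
    { intros t. apply (continuous_scal_r (K := R_AbsRing) (V := R_NormedModule) (IZR k) (fun t => t)).
      apply continuous_id. }
    apply (is_RInt_C_pair _ _ _ 0 0); unfold cis; simpl.
    + eapply is_RInt_R_val.
      2:{ apply (is_RInt_derive_R (fun t => sin (IZR k * t) / IZR k)).
          - intros t. auto_derive; auto. field; auto.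
          - intros t. now apply continuous_cos_comp. }
      rewrite sin_k2pi, Rmult_0_r, sin_0. field; auto.
    + eapply is_RInt_R_val.
      2:{ apply (is_RInt_derive_R (fun t => - cos (IZR k * t) / IZR k)).
          - intros t. auto_derive; auto. field; auto.
          - intros t. now apply continuous_sin_comp. }
      rewrite cos_k2pi, Rmult_0_r, cos_0. field; auto.
Qed.

Lemma so3_int_separable {T : Type} (s : list T) (A : R -> C) (K : T -> C) (G : T -> R -> R)
  (B : T -> R -> C) (IA : C) (IG : T -> R) (IB : T -> C) :
  is_RInt_C A 0 (2 * PI) IA ->
  (forall x, In x s -> is_RInt (fun t => sin t * G x t) 0 PI (IG x)) ->
  (forall x, In x s -> is_RInt_C (B x) 0 (2 * PI) (IB x)) ->
  so3_int (fun phi theta psi => sumC s (fun x => A phi * K x * RtoC (G x theta) * B x psi))%C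
  = (IA * sumC s (fun x => K x * RtoC (IG x) * IB x))%C.
Proof.
  intros HA HG HB. unfold so3_int.
  assert (Hpsi : forall phi theta,
    RInt (V := C_R_CompleteNormedModule)
      (fun psi => sumC s (fun x => A phi * K x * RtoC (G x theta) * B x psi))%C 0 (2 * PI)
    = sumC s (fun x => A phi * K x * RtoC (G x theta) * IB x)%C).
  { intros phi theta. apply is_RInt_C_unique, is_RInt_C_sumC. intros x Hx.
    now apply is_RInt_C_scal, HB. }
  assert (Htheta : forall phi,
    RInt (V := C_R_CompleteNormedModule)
      (fun theta => RtoC (sin theta) * sumC s (fun x => A phi * K x * RtoC (G x theta) * IB x))%C 0 PI
    = sumC s (fun x => A phi * K x * IB x * RtoC (IG x))%C).
  { intros phi. apply is_RInt_C_unique.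
    apply (is_RInt_C_ext
             (fun theta => sumC s (fun x => A phi * K x * IB x * RtoC (sin theta * G x theta)))%C).
    - intros theta. rewrite <- sumC_scal. apply sumC_ext. intros x _. rewrite RtoC_mult. ring.
    - apply is_RInt_C_sumC. intros x Hx. now apply is_RInt_C_scal, is_RInt_C_RtoC, HG. }
  rewrite (RInt_ext (V := C_R_CompleteNormedModule) _
    (fun phi => A phi * sumC s (fun x => K x * IB x * RtoC (IG x)))%C).
  - apply is_RInt_C_unique.
    apply (is_RInt_C_ext (fun phi => sumC s (fun x => K x * RtoC (IG x) * IB x) * A phi)%C).
    + intros phi. rewrite Cmult_comm. f_equal. apply sumC_ext. intros; ring.
    + rewrite Cmult_comm. now apply is_RInt_C_scal.
  - intros phi _. rewrite <- sumC_scal.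
    rewrite (sumC_ext _ _ (fun x => A phi * K x * IB x * RtoC (IG x)))%C by (intros; ring).
    rewrite <- Htheta.
    apply (RInt_ext (V := C_R_CompleteNormedModule)). intros theta _.
    now rewrite Hpsi.
Qed.

Lemma cis_mult_conj x y : (cis x * Cconj (cis y))%C = cis (x - y).
Proof.
  unfold cis. apply injective_projections; simpl; [rewrite cos_minus | rewrite sin_minus]; ring.
Qed.

Lemma Cconj_RtoC r : Cconj (RtoC r) = RtoC r.
Proof. apply injective_projections; simpl; ring. Qed.

Section ResolutionOfIdentity.
Variables (Lam : nat) (w : vec).
Notation d := (wigner_d Lam).

Lemma Pg_expansion phi theta psi a b : In a (idx Lam) -> In b (idx Lam) ->
  Pg Lam w phi theta psi a b
  = sumC (list_prod (idx Lam) (idx Lam)) (fun cd =>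
      cis (IZR (snd a - snd b) * phi) * (w (fst cd) * Cconj (w (snd cd)))
      * RtoC (d theta a (fst cd) * d theta b (snd cd))
      * cis (IZR (snd (fst cd) - snd (snd cd)) * psi))%C.
Proof.
  intros Ha Hb. unfold Pg. rewrite !omega_g_entry by auto.
  rewrite Cconj_sumC, sumC_mult, sumC_list_prod.
  apply sumC_ext; intros c _. apply sumC_ext; intros e _. simpl fst; simpl snd.
  rewrite !Cmult_conj, Cconj_RtoC, !minus_IZR, !Rmult_minus_distr_r, <- !cis_mult_conj, RtoC_mult.
  ring.
Qed.

Definition frame_kernel (a b : ix) : C :=
  sumC (idx Lam) (fun c => sumC (idx Lam) (fun e =>
    w c * Cconj (w e) * RtoC (wigner_overlap Lam c e a b) * cis_integral (snd c - snd e)))%C.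

Lemma so3_int_Pg a b : In a (idx Lam) -> In b (idx Lam) ->
  so3_int (fun phi theta psi => Pg Lam w phi theta psi a b)
  = (cis_integral (snd a - snd b) * frame_kernel a b)%C.
Proof.
  intros Ha Hb.
  transitivity (so3_int (fun phi theta psi => sumC (list_prod (idx Lam) (idx Lam)) (fun cd =>
      cis (IZR (snd a - snd b) * phi) * (w (fst cd) * Cconj (w (snd cd)))
      * RtoC (d theta a (fst cd) * d theta b (snd cd))
      * cis (IZR (snd (fst cd) - snd (snd cd)) * psi)))%C).
  { f_equal. do 3 (apply functional_extensionality; intro). now apply Pg_expansion. }
  rewrite (so3_int_separable (list_prod (idx Lam) (idx Lam))
             (fun phi => cis (IZR (snd a - snd b) * phi)) (fun cd => w (fst cd) * Cconj (w (snd cd)))%C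
             (fun cd theta => d theta a (fst cd) * d theta b (snd cd))
             (fun cd psi => cis (IZR (snd (fst cd) - snd (snd cd)) * psi))
             (cis_integral (snd a - snd b)) (fun cd => wigner_overlap Lam (fst cd) (snd cd) a b)
             (fun cd => cis_integral (snd (fst cd) - snd (snd cd)))).
  - unfold frame_kernel. now rewrite sumC_list_prod.
  - apply is_RInt_cis.
  - intros cd _. apply (is_RInt_ext (V := R_NormedModule) (overlap_density Lam (fst cd) (snd cd) a b));
      [intros; apply Rmult_assoc | apply is_RInt_wigner_overlap].
  - intros cd _. apply is_RInt_cis.
Qed.

Lemma frame_kernel_ladder a b : In a (idx Lam) -> In b (idx Lam) -> snd a = (snd b + 1)%Z ->
  (RtoC (Lp_into a) * frame_kernel (lower a) b = RtoC (Lm_into b) * frame_kernel a (raise b))%C.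
Proof.
  intros Ha Hb Hab. unfold frame_kernel. rewrite <- !sumC_scal. apply sumC_ext; intros c Hc.
  rewrite <- !sumC_scal. apply sumC_ext; intros e He.
  destruct (Z.eq_dec (snd c) (snd e)) as [E|E].
  - transitivity (w c * Cconj (w e) * RtoC (Lp_into a * wigner_overlap Lam c e (lower a) b)
                  * cis_integral (snd c - snd e))%C; [rewrite RtoC_mult; ring|].
    rewrite wigner_overlap_ladder, RtoC_mult by auto. ring.
  - unfold cis_integral. rewrite (proj2 (Z.eqb_neq _ _)) by lia. ring.
Qed.

End ResolutionOfIdentity.

Lemma Z_interval_ind (P : Z -> Prop) (lo hi : Z) :
  P lo -> (forall m, (lo <= m < hi)%Z -> P m -> P (m + 1)%Z) -> forall m, (lo <= m <= hi)%Z -> P m.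
Proof.
  intros H0 HS m Hm. replace m with (lo + Z.of_nat (Z.to_nat (m - lo)))%Z by lia.
  assert (Hn : (Z.to_nat (m - lo) <= Z.to_nat (hi - lo))%nat) by lia.
  induction (Z.to_nat (m - lo)) as [|n IH]; [now rewrite Z.add_0_r|].
  rewrite Nat2Z.inj_succ, Z.add_succ_r, <- Z.add_1_r. apply HS; [lia | apply IH; lia].
Qed.

Lemma Z_interval_ind_down (P : Z -> Prop) (lo hi : Z) :
  P hi -> (forall m, (lo <= m < hi)%Z -> P (m + 1)%Z -> P m) -> forall m, (lo <= m <= hi)%Z -> P m.
Proof.
  intros H0 HS m Hm. replace m with (lo + hi - (lo + hi - m))%Z by lia.
  apply (Z_interval_ind (fun k => P (lo + hi - k)%Z) lo hi); [| |lia].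
  { now replace (lo + hi - lo)%Z with hi by lia. }
  intros k Hk Pk. apply HS; [lia|]. now replace (lo + hi - (k + 1) + 1)%Z with (lo + hi - k)%Z by lia.
Qed.

Definition ladder_coef (l : nat) (m : Z) : R := sqrt (IZR ((Z.of_nat l - m) * (Z.of_nat l + m + 1))).

Lemma ladder_coef_neq0 l m : (- Z.of_nat l <= m < Z.of_nat l)%Z -> ladder_coef l m <> 0.
Proof. intros H. apply Rgt_not_eq, sqrt_lt_R0, IZR_lt, Z.mul_pos_pos; lia. Qed.

Lemma ladder_coef_top l : ladder_coef l (Z.of_nat l) = 0.
Proof. unfold ladder_coef. now rewrite Z.sub_diag, Z.mul_0_l, sqrt_0. Qed.

Lemma ladder_coef_bottom l : ladder_coef l (- Z.of_nat l - 1) = 0.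
Proof.
  unfold ladder_coef. replace (Z.of_nat l + (- Z.of_nat l - 1) + 1)%Z with 0%Z by lia.
  now rewrite Z.mul_0_r, sqrt_0.
Qed.

Lemma RtoC_mult_cancel (p : R) (x y : C) : p <> 0 -> (RtoC p * x = RtoC p * y)%C -> x = y.
Proof.
  intros Hp H. apply (f_equal (Cmult (RtoC (/ p)))) in H.
  rewrite !Cmult_assoc, <- RtoC_mult, Rinv_l, !Cmult_1_l in H by auto. exact H.
Qed.

Section KernelStructure.
Variables (Lam : nat) (w : vec).
Notation K l l' m := (frame_kernel Lam w (l, m%Z) (l', m%Z)).

Lemma frame_kernel_step l l' m : (l <= Lam)%nat -> (l' <= Lam)%nat ->
  (- Z.of_nat l <= m + 1 <= Z.of_nat l)%Z -> (- Z.of_nat l' <= m <= Z.of_nat l')%Z ->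
  (RtoC (ladder_coef l m) * K l l' m = RtoC (ladder_coef l' m) * K l l' (m + 1))%C.
Proof.
  intros Hl Hl' Hm Hm'.
  assert (E := frame_kernel_ladder Lam w (l, (m + 1)%Z) (l', m)).
  unfold lower, raise in E; cbn [fst snd] in E. replace (m + 1 - 1)%Z with m in E by lia.
  rewrite Lp_into_eq, Lm_into_eq in E; cbn [fst snd] in E.
  unfold ladder_coef. 
  replace ((Z.of_nat l - m) * (Z.of_nat l + m + 1))%Z
    with ((Z.of_nat l - (m + 1) + 1) * (Z.of_nat l + (m + 1)))%Z by ring.
  replace ((Z.of_nat l' - m) * (Z.of_nat l' + m + 1))%Z
    with ((Z.of_nat l' + m + 1) * (Z.of_nat l' - m))%Z by ring.
  apply E; [| |reflexivity]; apply In_idx; unfold valid; simpl; lia.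
Qed.

Lemma frame_kernel_diag_const l m : (l <= Lam)%nat -> (- Z.of_nat l <= m <= Z.of_nat l)%Z ->
  K l l m = K l l (- Z.of_nat l)%Z.
Proof.
  intros Hl. revert m. apply Z_interval_ind; [reflexivity|].
  intros m Hm IH. rewrite <- IH.
  symmetry. apply (RtoC_mult_cancel (ladder_coef l m)); [now apply ladder_coef_neq0|].
  apply frame_kernel_step; lia.
Qed.

Lemma frame_kernel_off_gt l l' m : (l <= Lam)%nat -> (l' < l)%nat ->
  (- Z.of_nat l' <= m <= Z.of_nat l')%Z -> K l l' m = 0%C.
Proof.
  intros Hl Hl'. revert m. apply Z_interval_ind_down.
  - apply (RtoC_mult_cancel (ladder_coef l (Z.of_nat l'))); [apply ladder_coef_neq0; lia|].
    rewrite frame_kernel_step, ladder_coef_top by lia. ring.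
  - intros m Hm IH. apply (RtoC_mult_cancel (ladder_coef l m)); [apply ladder_coef_neq0; lia|].
    rewrite frame_kernel_step, IH by lia. ring.
Qed.

Lemma frame_kernel_off_lt l l' m : (l' <= Lam)%nat -> (l < l')%nat ->
  (- Z.of_nat l <= m <= Z.of_nat l)%Z -> K l l' m = 0%C.
Proof.
  intros Hl' Hl. revert m. apply Z_interval_ind.
  - apply (RtoC_mult_cancel (ladder_coef l' (- Z.of_nat l - 1))); [apply ladder_coef_neq0; lia|].
    assert (E := frame_kernel_step l l' (- Z.of_nat l - 1)).
    replace (- Z.of_nat l - 1 + 1)%Z with (- Z.of_nat l)%Z in E by lia.
    rewrite <- E, ladder_coef_bottom by lia. ring.
  - intros m Hm IH. apply (RtoC_mult_cancel (ladder_coef l' m)); [apply ladder_coef_neq0; lia|].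
    rewrite <- frame_kernel_step, IH by lia. ring.
Qed.

End KernelStructure.

Section Normalization.
Variables (Lam : nat) (w : vec).

Lemma sum_frame_kernel_diag l : (l <= Lam)%nat ->
  sumC (mrange l) (fun m => frame_kernel Lam w (l, m) (l, m))
  = RtoC (4 * PI * sumR (mrange l) (fun h => Cmod (w (l, h)) ^ 2)).
Proof.
  intros Hl. unfold frame_kernel. rewrite sumC_swap.
  rewrite (sumC_ext _ _ (fun c =>
    RtoC (Cmod (w c) ^ 2 * (2 * PI) * (2 * (if Nat.eqb l (fst c) then 1 else 0))))).
  2:{ intros c Hc. rewrite sumC_swap.
      rewrite (sumC_ext _ _ (fun e => w c * Cconj (w e) * cis_integral (snd c - snd e)
        * RtoC (2 * (if Nat.eqb l (fst c) then (if ix_eqb c e then 1 else 0) else 0))))%C.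
      2:{ intros e He. rewrite <- (sum_wigner_overlap_diag Lam) by auto.
          rewrite <- sumC_RtoC, <- sumC_scal. apply sumC_ext; intros; ring. }
      rewrite (sumC_single _ _ c); auto using NoDup_idx.
      - rewrite ix_eqb_refl. unfold cis_integral. rewrite Z.sub_diag. simpl Z.eqb. cbv iota.
        rewrite <- Cmod2_conj, !RtoC_mult. ring.
      - intros e _ He. rewrite ix_eqb_neq by congruence.
        replace (if Nat.eqb l (fst c) then 0 else 0) with 0 by now destruct (Nat.eqb l (fst c)).
        rewrite Rmult_0_r. apply Cmult_0_r. }
  rewrite sumC_RtoC. f_equal. rewrite sumR_idx.
  rewrite (sumR_single _ _ l); [| apply seq_NoDup | apply in_seq; lia |].
  - rewrite <- sumR_scal. apply sumR_ext. intros h _. simpl. rewrite Nat.eqb_refl. ring.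
  - intros l' _ Hl'. apply sumR_0. intros h _. simpl.
    destruct (Nat.eqb_spec l l'); [congruence | ring].
Qed.

Hypothesis w_normalized : forall l : nat, (l <= Lam)%nat ->
  sumR (mrange l) (fun h => Cmod (w (l, h)) ^ 2) = (2 * INR l + 1) / (INR Lam + 1) ^ 2.

Lemma frame_kernel_diag l m : (l <= Lam)%nat -> (- Z.of_nat l <= m <= Z.of_nat l)%Z ->
  frame_kernel Lam w (l, m) (l, m) = RtoC (4 * PI / (INR Lam + 1) ^ 2).
Proof.
  intros Hl Hm. rewrite frame_kernel_diag_const by auto.
  assert (Htr := sum_frame_kernel_diag l Hl).
  rewrite w_normalized in Htr by auto.
  rewrite (sumC_ext _ _ (fun _ => frame_kernel Lam w (l, (- Z.of_nat l)%Z) (l, (- Z.of_nat l)%Z))) in Htr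
    by (intros m' Hm'; apply In_mrange in Hm'; now apply frame_kernel_diag_const).
  rewrite sumC_const, length_mrange in Htr.
  assert (Hn : INR (2 * l + 1) <> 0) by (apply not_0_INR; lia).
  apply (RtoC_mult_cancel (INR (2 * l + 1))); auto.
  rewrite Htr, <- RtoC_mult. f_equal.
  assert (INR Lam + 1 <> 0) by (pose proof (pos_INR Lam); lra).
  rewrite plus_INR, mult_INR. simpl. field; auto.
Qed.

End Normalization.

Lemma resolution_of_identity (Lam : nat) (w : vec) :
  (forall l : nat, (l <= Lam)%nat ->
     sumR (mrange l) (fun h => Cmod (w (l, h)) ^ 2) = (2 * INR l + 1) / (INR Lam + 1) ^ 2) ->
  forall a b : ix, In a (idx Lam) -> In b (idx Lam) ->
    idm a b = (RtoC ((INR Lam + 1) ^ 2 / (8 * PI ^ 2))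
               * so3_int (fun phi theta psi => Pg Lam w phi theta psi a b))%C.
Proof.
  intros Hw a b Ha Hb. rewrite so3_int_Pg by auto.
  pose proof PI_RGT_0. assert (INR Lam + 1 <> 0) by (pose proof (pos_INR Lam); lra).
  pose proof Ha as Ha'; pose proof Hb as Hb'. apply In_idx in Ha', Hb'.
  destruct a as [l m], b as [l' m']; unfold valid in Ha', Hb'; simpl in Ha', Hb'.
  unfold idm, ix_eqb, cis_integral; cbn [fst snd].
  destruct (Z.eqb_spec (m - m') 0) as [E|E];
    [|rewrite (proj2 (Z.eqb_neq m m')), andb_false_r by lia; ring].
  replace m' with m by lia. rewrite Z.eqb_refl, andb_true_r.
  destruct (Nat.lt_total l l') as [Hlt|[<-|Hgt]].
  - rewrite frame_kernel_off_lt, (proj2 (Nat.eqb_neq l l')) by lia. ring.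
  - rewrite (frame_kernel_diag Lam w Hw), Nat.eqb_refl by lia.
    rewrite <- !RtoC_mult. f_equal. field. lra.
  - rewrite frame_kernel_off_gt, (proj2 (Nat.eqb_neq l l')) by lia. ring.
Qed.

(** * The reflection symmetry *)

Definition ix_neg (a : ix) : ix := (fst a, (- snd a)%Z).

Lemma ix_neg_involutive a : ix_neg (ix_neg a) = a.
Proof. destruct a; unfold ix_neg; simpl; f_equal; lia. Qed.

Lemma ix_neg_In Lam a : In a (idx Lam) -> In (ix_neg a) (idx Lam).
Proof. rewrite !In_idx. unfold valid, ix_neg; simpl. lia. Qed.

Lemma lower_ix_neg a : lower (ix_neg a) = ix_neg (raise a).
Proof. unfold lower, raise, ix_neg; simpl. f_equal. lia. Qed.

Lemma raise_ix_neg a : raise (ix_neg a) = ix_neg (lower a).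
Proof. unfold lower, raise, ix_neg; simpl. f_equal. lia. Qed.

Lemma Lp_into_ix_neg a : Lp_into (ix_neg a) = Lm_into a.
Proof. rewrite Lp_into_eq, Lm_into_eq. unfold ix_neg; simpl. do 2 f_equal. ring. Qed.

Lemma Lm_into_ix_neg a : Lm_into (ix_neg a) = Lp_into a.
Proof. rewrite Lp_into_eq, Lm_into_eq. unfold ix_neg; simpl. do 2 f_equal. ring. Qed.

Lemma sumC_ix_neg Lam (f : ix -> C) : sumC (idx Lam) (fun c => f (ix_neg c)) = sumC (idx Lam) f.
Proof.
  rewrite <- sumC_map. apply sumC_perm, NoDup_Permutation; auto using NoDup_idx.
  - apply FinFun.Injective_map_NoDup; [|apply NoDup_idx].
    intros x y H. now rewrite <- (ix_neg_involutive x), H, ix_neg_involutive.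
  - intros x. rewrite in_map_iff. split.
    + intros [y [<- Hy]]. now apply ix_neg_In.
    + intros Hx. exists (ix_neg x). auto using ix_neg_involutive, ix_neg_In.
Qed.

(* [parity m = (-1)^m]. *)
Definition parity (m : Z) : R := cos (IZR m * PI).

Lemma sin_IZR_PI m : sin (IZR m * PI) = 0.
Proof. apply sin_eq_0_1. now exists m. Qed.

Lemma parity_pred m : parity (m - 1) = - parity m.
Proof.
  unfold parity. rewrite minus_IZR, Rmult_minus_distr_r, Rmult_1_l, cos_minus, cos_PI, sin_PI. ring.
Qed.

Lemma parity_succ m : parity (m + 1) = - parity m.
Proof. unfold parity. rewrite plus_IZR, Rmult_plus_distr_r, Rmult_1_l. apply neg_cos. Qed.

Lemma parity_sq m : parity m * parity m = 1.
Proof.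
  unfold parity. pose proof (sin2_cos2 (IZR m * PI)) as H.
  rewrite sin_IZR_PI in H. unfold Rsqr in H. lra.
Qed.

Section WignerSymmetry.
Variable Lam : nat.
Notation d := (wigner_d Lam).

Definition reflection_defect (c : ix) (t : R) (a : ix) : R :=
  parity (snd a) * d t (ix_neg a) (ix_neg c) - parity (snd c) * d t a c.

Lemma reflection_defect_flow c : solves_flow (idx Lam) X2 (reflection_defect c).
Proof.
  intros t a Ha. unfold reflection_defect. eapply is_derive_val.
  2:{ apply is_derive_Rminus; (apply Derive.is_derive_mult; [apply is_derive_const_R|]);
      apply is_derive_wigner_d; auto using ix_neg_In. }
  rewrite (sum_X2 Lam a) by auto.
  rewrite lower_ix_neg, raise_ix_neg, Lp_into_ix_neg, Lm_into_ix_neg.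
  replace (snd (lower a)) with (snd a - 1)%Z by reflexivity.
  replace (snd (raise a)) with (snd a + 1)%Z by reflexivity.
  rewrite parity_pred, parity_succ. field.
Qed.

Lemma wigner_d_ix_neg t a c : In a (idx Lam) -> In c (idx Lam) ->
  d t (ix_neg a) (ix_neg c) = parity (snd a) * parity (snd c) * d t a c.
Proof.
  intros Ha Hc.
  assert (H0 : reflection_defect c t a = 0).
  { apply (flow_unique (idx Lam) X2 X2_antisym _ (reflection_defect_flow c)); auto.
    intros x Hx. unfold reflection_defect. rewrite !wigner_d_0.
    destruct (ix_eq_dec x c) as [->|Hne]; [rewrite !ix_eqb_refl; ring|].
    rewrite !ix_eqb_neq; [ring | auto |].
    intros E. apply Hne. now rewrite <- (ix_neg_involutive x), E, ix_neg_involutive. }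
  unfold reflection_defect in H0.
  transitivity (parity (snd a) * parity (snd a) * d t (ix_neg a) (ix_neg c));
    [rewrite parity_sq; ring|].
  rewrite !Rmult_assoc. f_equal. lra.
Qed.

End WignerSymmetry.

Lemma cis_neg_parity (m : Z) (x : R) :
  (cis (IZR (- m) * x) * RtoC (parity m))%C = cis (IZR m * (PI - x)).
Proof.
  unfold cis, parity. rewrite opp_IZR.
  replace (IZR m * (PI - x)) with (IZR m * PI - IZR m * x) by ring.
  replace (- IZR m * x) with (- (IZR m * x)) by ring.
  apply injective_projections; simpl;
    rewrite ?cos_minus, ?sin_minus, ?cos_neg, ?sin_neg, sin_IZR_PI; ring.
Qed.

Definition reflect_angle (x : R) : R := if Rle_dec x PI then PI - x else 3 * PI - x.

Lemma reflect_angle_range x : 0 <= x < 2 * PI -> 0 <= reflect_angle x < 2 * PI.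
Proof. intros H. pose proof PI_RGT_0. unfold reflect_angle. destruct (Rle_dec x PI); lra. Qed.

Lemma cis_reflect_angle (m : Z) x : cis (IZR m * reflect_angle x) = cis (IZR m * (PI - x)).
Proof.
  unfold reflect_angle. destruct (Rle_dec x PI); auto.
  unfold cis. replace (IZR m * (3 * PI - x)) with (IZR m * (PI - x) + IZR m * (2 * PI)) by ring.
  rewrite cos_plus, sin_plus, cos_k2pi, sin_k2pi. apply injective_projections; simpl; ring.
Qed.

Lemma Uop_omega_g Lam (w : vec) : (forall a, In a (idx Lam) -> w a = w (fst a, (- snd a)%Z)) ->
  forall phi theta psi, euler_range phi theta psi ->
  exists phi' theta' psi', euler_range phi' theta' psi' /\
    forall a, In a (idx Lam) -> Uop (omega_g Lam w phi theta psi) a = omega_g Lam w phi' theta' psi' a.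
Proof.
  intros Hw phi theta psi [Hphi [Htheta Hpsi]].
  exists (reflect_angle phi), theta, (reflect_angle psi).
  split; [repeat split; try apply reflect_angle_range; tauto|].
  intros a Ha. unfold Uop. fold (ix_neg a).
  rewrite !omega_g_entry by auto using ix_neg_In.
  rewrite <- (sumC_ix_neg Lam). apply sumC_ext. intros c Hc.
  assert (Hwc : w (ix_neg c) = w c) by (symmetry; now apply Hw).
  rewrite wigner_d_ix_neg, Hwc by auto.
  unfold ix_neg; cbn [fst snd]. rewrite !cis_reflect_angle, <- !cis_neg_parity, !RtoC_mult. ring.
Qed.

Theorem theorem3 (Lam : nat) (w : vec) :
  (forall l : nat, (l <= Lam)%nat ->
     sumR (mrange l) (fun h => Cmod (w (l, h)) ^ 2)
     = (2 * INR l + 1) / (INR Lam + 1) ^ 2) ->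
  (forall a b : ix, In a (idx Lam) -> In b (idx Lam) ->
     idm a b
     = (RtoC ((INR Lam + 1) ^ 2 / (8 * PI ^ 2))
        * so3_int (fun phi theta psi => Pg Lam w phi theta psi a b))%C)
  /\
  ((forall a : ix, In a (idx Lam) -> w a = w (fst a, (- snd a)%Z)) ->
   forall phi theta psi : R, euler_range phi theta psi ->
   exists phi' theta' psi' : R, euler_range phi' theta' psi' /\
     forall a : ix, In a (idx Lam) ->
       Uop (omega_g Lam w phi theta psi) a = omega_g Lam w phi' theta' psi' a).
Proof.
  intros Hw. split.
  - now apply resolution_of_identity.
  - apply Uop_omega_g.
Qed.
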